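(* Let $0<q<1$, $0<a<q^{-1}$, $b<q^{-1}$, $c\in\mathbb{C}\setminus\{0\}$ with $\alpha acq^{m}\ne1$, $\alpha bq^m/c\neq1$ for $m\ge1$, and let $\alpha$ satisfy $\sqrt{aq}<\alpha<1/\sqrt{aq}$. For $n\in\mathbb{N}$ and $x=\cos\theta$, $\theta\in[0,\pi]$, \[ \sum_{k=0}^\infty\alpha^k p_n(q^k;a,b;q)\,\frac{(\sqrt{aq})^k}{(q;q)_k}\,Q_k\bigl(x;c\sqrt{aq},\tfrac{b}{c}\sqrt{q/a}\,\big|\,q\bigr) =\frac{\alpha^n(aq)^{n/2}\,(\alpha acq^{n+1},\alpha bq^{n+1}/c;q)_\infty}{(aq;q)_n\,(\alpha\sqrt{aq}\,e^{i\theta},\alpha\sqrt{aq}\,e^{-i\theta};q)_\infty}\;p_n\bigl(x;\alpha\sqrt{aq},c\sqrt{aq},\tfrac{b}{c}\sqrt{q/a},\sqrt{aq}/\alpha\,\big|\,q\bigr). \] In particular, for $\alpha=1$ the right-hand side is $\frac{(aq)^{n/2}(acq^{n+1},bq^{n+1}/c;q)_\infty}{(aq;q)_n(\sqrt{aq}e^{i\theta},\sqrt{aq}e^{-i\theta};q)_\infty}\,p_n(x;\sqrt{aq},c\sqrt{aq},\tfrac bc\sqrt{q/a},\sqrt{aq}|q)$.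
   Context: $(x;q)_k=\prod_{j=0}^{k-1}(1-xq^j)$, $(x;q)_\infty=\prod_{j\ge0}(1-xq^j)$, $(x_1,\dots,x_r;q)_k=\prod_i(x_i;q)_k$. ${}_{r}\phi_{s}\!\left(\begin{smallmatrix}a_1,\dots,a_r\\ b_1,\dots,b_s\end{smallmatrix};q,z\right)=\sum_{j\ge0}\frac{(a_1,\dots,a_r;q)_j}{(q,b_1,\dots,b_s;q)_j}\bigl((-1)^jq^{j(j-1)/2}\bigr)^{1+s-r}z^j$. Little $q$-Jacobi: $p_n(x;a,b;q)={}_2\phi_1\!\left(\begin{smallmatrix}q^{-n},abq^{n+1}\\ aq\end{smallmatrix};q,qx\right)$. Al-Salam–Chihara: $Q_n(x;c_1,c_2|q)=\frac{(c_1c_2;q)_n}{c_1^n}\,{}_3\phi_2\!\left(\begin{smallmatrix}q^{-n},c_1e^{i\theta},c_1e^{-i\theta}\\ c_1c_2,\,0\end{smallmatrix};q,q\right)$. Askey–Wilson: $p_n(x;a_1,a_2,a_3,a_4|q)=a_1^{-n}(a_1a_2,a_1a_3,a_1a_4;q)_n\,{}_4\phi_3\!\left(\begin{smallmatrix}q^{-n},a_1a_2a_3a_4q^{n-1},a_1e^{i\theta},a_1e^{-i\theta}\\ a_1a_2,\,a_1a_3,\,a_1a_4\end{smallmatrix};q,q\right)$, all with $x=\cos\theta$. *)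

From Stdlib Require Import Reals Lra List ZArith.
From Stdlib Require Import ClassicalEpsilon.
Open Scope R_scope.

Definition Cplx : Type := (R * R)%type.
Definition RtoC (x : R) : Cplx := (x, 0).
Definition Czero : Cplx := (0, 0).
Definition Cone : Cplx := (1, 0).
Definition Cadd (z w : Cplx) : Cplx := (fst z + fst w, snd z + snd w).
Definition Copp (z : Cplx) : Cplx := (- fst z, - snd z).
Definition Csub (z w : Cplx) : Cplx := Cadd z (Copp w).
Definition Cmul (z w : Cplx) : Cplx :=
  (fst z * fst w - snd z * snd w, fst z * snd w + snd z * fst w).
Definition Cinv (z : Cplx) : Cplx :=
  let d := fst z * fst z + snd z * snd z in (fst z / d, - snd z / d).
Definition Cdiv (z w : Cplx) : Cplx := Cmul z (Cinv w).
Fixpoint Cpow (z : Cplx) (n : nat) : Cplx :=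
  match n with O => Cone | S m => Cmul z (Cpow z m) end.
Definition Cexpi (t : R) : Cplx := (cos t, sin t).

Fixpoint Csum (f : nat -> Cplx) (N : nat) : Cplx :=
  match N with O => Czero | S m => Cadd (Csum f m) (f m) end.
Fixpoint Cprod (f : nat -> Cplx) (N : nat) : Cplx :=
  match N with O => Cone | S m => Cmul (Cprod f m) (f m) end.

(** convergence of a complex sequence (componentwise = in modulus) *)
Definition Cconv (u : nat -> Cplx) (l : Cplx) : Prop :=
  Un_cv (fun k => fst (u k)) (fst l) /\ Un_cv (fun k => snd (u k)) (snd l).

(** the limit of a sequence (its value is meaningful when the sequence
    converges; chosen by classical description) *)
Definition Clim (u : nat -> Cplx) : Cplx :=
  epsilon (inhabits Czero) (fun l => Cconv u l).

Definition Cseries_conv (f : nat -> Cplx) (l : Cplx) : Prop :=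
  Cconv (fun N => Csum f N) l.

Definition qpoch (x : Cplx) (q : R) (k : nat) : Cplx :=
  Cprod (fun j => Csub Cone (Cmul x (RtoC (q ^ j)))) k.
Definition qpoch_inf (x : Cplx) (q : R) : Cplx := Clim (fun k => qpoch x q k).
Definition qpochs (xs : list Cplx) (q : R) (k : nat) : Cplx :=
  fold_right (fun x acc => Cmul (qpoch x q k) acc) Cone xs.

(** All series below contain q^{-n} as a
    numerator parameter and therefore terminate at j = n; they are summed
    over j = 0..n. *)
Definition phi_term (as_ bs : list Cplx) (q : R) (z : Cplx) (j : nat) : Cplx :=
  let r := Z.of_nat (length as_) in
  let s := Z.of_nat (length bs) in
  Cmul (Cdiv (qpochs as_ q j) (qpochs (RtoC q :: bs) q j))
       (Cmul (RtoC (powerRZ ((-1) ^ j * q ^ (j * (j - 1) / 2)) (1 + s - r)))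
             (Cpow z j)).
Definition phi_trunc (as_ bs : list Cplx) (q : R) (z : Cplx) (N : nat) : Cplx :=
  Csum (phi_term as_ bs q z) (S N).

Definition little_qJacobi (n : nat) (x a b q : R) : Cplx :=
  phi_trunc (RtoC (/ q ^ n) :: RtoC (a * b * q ^ (S n)) :: nil)
            (RtoC (a * q) :: nil) q (RtoC (q * x)) n.

Definition al_salam_chihara (n : nat) (theta : R) (c1 c2 : Cplx) (q : R) : Cplx :=
  Cmul (Cdiv (qpoch (Cmul c1 c2) q n) (Cpow c1 n))
       (phi_trunc (RtoC (/ q ^ n) :: Cmul c1 (Cexpi theta)
                     :: Cmul c1 (Cexpi (- theta)) :: nil)
                  (Cmul c1 c2 :: Czero :: nil) q (RtoC q) n).

Definition askey_wilson (n : nat) (theta : R) (a1 a2 a3 a4 : Cplx) (q : R) : Cplx :=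
  Cmul (Cdiv (qpochs (Cmul a1 a2 :: Cmul a1 a3 :: Cmul a1 a4 :: nil) q n)
             (Cpow a1 n))
       (phi_trunc (RtoC (/ q ^ n)
                     :: Cmul (Cmul (Cmul (Cmul a1 a2) a3) a4)
                             (RtoC (powerRZ q (Z.of_nat n - 1)))
                     :: Cmul a1 (Cexpi theta)
                     :: Cmul a1 (Cexpi (- theta)) :: nil)
                  (Cmul a1 a2 :: Cmul a1 a3 :: Cmul a1 a4 :: nil)
                  q (RtoC q) n).

(** Write [s = sqrt(aq)], [t = alpha s], [u = e^{i theta}] and
    [c1 = c s], [c2 = (b/c) sqrt(q/a)], so that [c1 c2 = bq].
    The proof has three ingredients.
    - Generating function.  With [r_k = Q_k(x;c1,c2|q)/(q;q)_k],
      [sum_k r_k t^k = (c1 t, c2 t;q)_oo / (t u, t/u;q)_oo] for [0 <= t < 1].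
      Both sides are compared through the Cauchy product of two q-binomial
      series [sum (c1/u;q)_k/(q;q)_k (tu)^k] and [sum (c2 u;q)_k/(q;q)_k (t/u)^k]:
      the coefficients of that product and the normalized 3phi2 sums [r_k]
      satisfy the same three-term recurrence with the same initial values.
    - Interchange.  [p_n(q^k;a,b;q)] is a terminating sum over [j <= n] of
      multiples of [(q^j)^k], so the series of the theorem is a finite
      combination of generating functions evaluated at [t q^j].
    - Resummation.  [G(t q^j) = G(t) (tu, t/u;q)_j / (c1 t, c2 t;q)_j], and the
      resulting finite sum is the 4phi3 defining the Askey--Wilson polynomial
      with parameters [(t, c1, c2, aq/t)]. *)
From Coquelicot Require Import Coquelicot.
From Pilot Require Import Defs.
From Stdlib Require Import Reals List Lra Lia ClassicalEpsilon.
Open Scope R_scope.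

Lemma Cinv_Coquelicot z : Defs.Cinv z = Complex.Cinv z.
Proof. unfold Defs.Cinv, Complex.Cinv. simpl. f_equal; f_equal; ring. Qed.
Lemma Cdiv_Coquelicot z w : Defs.Cdiv z w = Complex.Cdiv z w.
Proof. unfold Defs.Cdiv, Complex.Cdiv. rewrite Cinv_Coquelicot. reflexivity. Qed.

Ltac toC := repeat rewrite ?Cdiv_Coquelicot, ?Cinv_Coquelicot in *;
  try change Defs.Cmul with Cmult in *; try change Defs.Cadd with Cplus in *;
  try change Defs.Csub with Cminus in *; try change Defs.Copp with Complex.Copp in *;
  try change Defs.RtoC with Complex.RtoC in *; try change Defs.Cpow with Complex.Cpow in *;
  try change Czero with (Complex.RtoC 0) in *; try change Cone with (Complex.RtoC 1) in *.

Notation RC := Complex.RtoC.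
Definition C_field_th : @Field_theory.field_theory Cplx (RC 0) (RC 1) Cplus Cmult
  Cminus Complex.Copp Complex.Cdiv Complex.Cinv eq := C_field_theory.
Add Field Cplx_field : C_field_th.
(** [Cplx] and [C] are the same type; [ring]/[field] need the goal stated at [C]. *)
Ltac atC := toC; match goal with |- @eq _ ?a ?b => let T := type of a in change (@eq T a b) end.
Ltac cring := (atC || idtac); ring.
Ltac cfield := (atC || idtac); field.

Lemma Un_cv_ext (u v : nat -> R) l : (forall n, u n = v n) -> Un_cv u l -> Un_cv v l.
Proof. intros H Hu e He. destruct (Hu e He) as [N HN]. exists N. intros n Hn. rewrite <- H. auto. Qed.
Lemma Un_cv_S (u : nat -> R) l : Un_cv (fun n => u (S n)) l -> Un_cv u l.
Proof. intros H e He. destruct (H e He) as [N HN]. exists (S N). intros n Hn.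
 destruct n; [lia|]. apply HN. lia. Qed.
Lemma Un_cv_S' (u : nat -> R) l : Un_cv u l -> Un_cv (fun n => u (S n)) l.
Proof. intros H e He. destruct (H e He) as [N HN]. exists N. intros n Hn. apply HN. lia. Qed.
Lemma Un_cv_shift (u : nat -> R) l k : Un_cv (fun n => u (n + k)%nat) l -> Un_cv u l.
Proof. intros H e He. destruct (H e He) as [N HN]. exists (N + k)%nat. intros n Hn.
 replace n with ((n - k) + k)%nat by lia. apply HN. lia. Qed.
Lemma Un_cv_const c : Un_cv (fun _ => c) c.
Proof. intros e He. exists O. intros. unfold Rdist. rewrite Rminus_diag, Rabs_R0. lra. Qed.
Lemma Un_cv_geom r : 0 <= r < 1 -> Un_cv (fun n => r ^ n) 0.
Proof. intros Hr. apply is_lim_seq_Reals. apply is_lim_seq_geom. rewrite Rabs_pos_eq; lra. Qed.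

Lemma Un_cv_abs_bound (x : nat -> R) l c B :
  Un_cv x l -> (forall n, Rabs (x n - c) <= B) -> Rabs (l - c) <= B.
Proof. intros Hx H.
 assert (Hlow : c - B <= l).
 { apply Rle_cv_lim with (Un := fun _ => c - B) (Vn := x); auto; [|apply Un_cv_const].
   intros n; specialize (H n); apply Rabs_le_between' in H. lra. }
 assert (Hup : l <= c + B).
 { apply Rle_cv_lim with (Un := x) (Vn := fun _ => c + B); auto; [|apply Un_cv_const].
   intros n; specialize (H n); apply Rabs_le_between' in H. lra. }
 apply Rabs_le. lra. Qed.

Lemma exp_le x y : x <= y -> exp x <= exp y.
Proof. intros [H|H]; [left; apply exp_increasing; auto|subst; lra]. Qed.
Lemma pow_le1 q k : 0 <= q <= 1 -> q ^ k <= 1.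
Proof. intros H. induction k; simpl; [lra|]. pose proof (pow_le q k (proj1 H)). nra. Qed.
Lemma sqrt2_lt_2 : sqrt 2 < 2.
Proof. rewrite <- (sqrt_Rsqr 2) at 2 by lra. apply sqrt_lt_1_alt. unfold Rsqr. lra. Qed.

(** [1 - y >= exp (-y/(1-m))] for [0 <= y <= m < 1]: the lower bound behind
    the non-vanishing of infinite q-products. *)
Lemma one_minus_ge_exp y m : 0 <= y <= m -> m < 1 -> exp (- (y / (1 - m))) <= 1 - y.
Proof. intros Hy Hm.
 assert (Hinv : exp (y / (1 - y)) * (1 - y) >= 1).
 { pose proof (exp_ineq1_le (y / (1 - y))).
   assert ((1 + y / (1 - y)) * (1 - y) = 1) by (field; lra).
   assert (0 < 1 - y) by lra. nra. }
 assert (Hmono : exp (- (y / (1 - m))) <= exp (- (y / (1 - y)))).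
 { apply exp_le. apply Ropp_le_contravar. unfold Rdiv. apply Rmult_le_compat_l; [lra|].
   apply Rinv_le_contravar; lra. }
 assert (0 < exp (y / (1 - y))) by apply exp_pos.
 eapply Rle_trans; [exact Hmono|].
 apply (Rmult_le_reg_l (exp (y / (1 - y)))); auto. rewrite <- exp_plus, Rplus_opp_r, exp_0. lra. Qed.

Lemma ex_series_geom_dom (a : nat -> R) K r :
  0 <= r < 1 -> (forall k, Rabs (a k) <= K * r ^ k) -> ex_series a.
Proof. intros Hr H. apply (ex_series_le a (fun k => K * r ^ k)).
 - intros n. apply H.
 - apply (ex_series_scal_l K (fun k => r ^ k)). apply ex_series_geom. rewrite Rabs_pos_eq; lra. Qed.

Lemma infinite_sum_ext a b l : (forall n, a n = b n) -> infinite_sum a l -> infinite_sum b l.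
Proof. intros H Ha. unfold infinite_sum in *. eapply Un_cv_ext; [|exact Ha].
 intros N. apply sum_eq. intros; auto. Qed.
Lemma infinite_sum_plus a b la lb : infinite_sum a la -> infinite_sum b lb ->
  infinite_sum (fun n => a n + b n) (la + lb).
Proof. intros Ha Hb. apply (Un_cv_ext (fun N => sum_f_R0 a N + sum_f_R0 b N)).
 intros; rewrite plus_sum; auto. apply (CV_plus (sum_f_R0 a) (sum_f_R0 b)); auto. Qed.
Lemma infinite_sum_minus a b la lb : infinite_sum a la -> infinite_sum b lb ->
  infinite_sum (fun n => a n - b n) (la - lb).
Proof. intros Ha Hb. apply (Un_cv_ext (fun N => sum_f_R0 a N - sum_f_R0 b N)).
 intros; rewrite minus_sum; auto. apply (CV_minus (sum_f_R0 a) (sum_f_R0 b)); auto. Qed.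

Lemma real_cauchy_product (a b : nat -> R) la lb K r : 0 <= r < 1 ->
  (forall k, Rabs (a k) <= K * r ^ k) -> (forall k, Rabs (b k) <= K * r ^ k) ->
  infinite_sum a la -> infinite_sum b lb ->
  infinite_sum (fun n => sum_f_R0 (fun k => a k * b (n - k)%nat) n) (la * lb).
Proof. intros Hr Ha Hb Sa Sb. apply is_series_Reals. apply is_series_mult.
 - apply is_series_Reals; auto.
 - apply is_series_Reals; auto.
 - apply (ex_series_geom_dom _ K r Hr). intros k. rewrite Rabs_Rabsolu. auto.
 - apply (ex_series_geom_dom _ K r Hr). intros k. rewrite Rabs_Rabsolu. auto. Qed.

Lemma powerRZ_pred q n : q <> 0 -> powerRZ q (Z.of_nat n - 1) * q = q ^ n.
Proof. intros Hq. rewrite pow_powerRZ.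
 replace (Z.of_nat n) with ((Z.of_nat n - 1) + 1)%Z at 2 by lia.
 rewrite powerRZ_add by auto. simpl. ring. Qed.

Section FiniteSums.
Local Open Scope C_scope.

Lemma Csum_S f n : Csum f (S n) = Csum f n + f n.
Proof. reflexivity. Qed.
Lemma Csum_O f : Csum f 0 = RC 0.
Proof. reflexivity. Qed.
Lemma Csum_ext f g N : (forall k, (k < N)%nat -> f k = g k) -> Csum f N = Csum g N.
Proof. induction N; intros H; [reflexivity|]. rewrite !Csum_S, IHN, H; auto. Qed.
Lemma Csum_plus f g N : Csum (fun k => f k + g k) N = Csum f N + Csum g N.
Proof. induction N; [simpl; cring|]. rewrite !Csum_S, IHN. cring. Qed.
Lemma Csum_scal c f N : Csum (fun k => c * f k) N = c * Csum f N.
Proof. induction N; [simpl; cring|]. rewrite !Csum_S, IHN. cring. Qed.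
Lemma Csum_opp f N : Csum (fun k => - f k) N = - Csum f N.
Proof. induction N; [simpl; cring|]. rewrite !Csum_S, IHN. cring. Qed.
Lemma Csum_zero f N : (forall k, (k < N)%nat -> f k = RC 0) -> Csum f N = RC 0.
Proof. induction N; intros H; [reflexivity|]. rewrite Csum_S, IHN, H; auto. cring. Qed.
Lemma Csum_first f N : Csum f (S N) = f O + Csum (fun k => f (S k)) N.
Proof. induction N; [rewrite Csum_S, !Csum_O; cring|].
 rewrite Csum_S, IHN, (Csum_S (fun k => f (S k))). cring. Qed.
Lemma Csum_split f N M : Csum f (N + M)%nat = Csum f N + Csum (fun k => f (N + k)%nat) M.
Proof. induction M; [rewrite Nat.add_0_r, Csum_O; cring|].
 rewrite Nat.add_succ_r, !Csum_S, IHM. cring. Qed.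
Lemma Csum_extend f n N : (n <= N)%nat ->
  (forall k, (n <= k)%nat -> (k < N)%nat -> f k = RC 0) -> Csum f N = Csum f n.
Proof. intros Hn H. replace N with (n + (N - n))%nat by lia. rewrite Csum_split.
 rewrite (Csum_zero (fun k => f (n + k)%nat)); [cring|]. intros k Hk. apply H; lia. Qed.

Lemma Csum_fst f N : fst (Csum f (S N)) = sum_f_R0 (fun k => fst (f k)) N.
Proof. induction N; simpl; [ring|]. simpl in IHN. rewrite IHN. reflexivity. Qed.
Lemma Csum_snd f N : snd (Csum f (S N)) = sum_f_R0 (fun k => snd (f k)) N.
Proof. induction N; simpl; [ring|]. simpl in IHN. rewrite IHN. reflexivity. Qed.

Lemma Csum_mod_le f (g : nat -> R) N : (forall k, Cmod (f k) <= g k)%R ->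
  (Cmod (Csum f N) <= fst (Csum (fun k => RC (g k)) N))%R.
Proof. intros H. induction N.
 - simpl. change (Cmod (RC 0) <= 0)%R. rewrite Cmod_0. lra.
 - rewrite !Csum_S. eapply Rle_trans; [apply Cmod_triangle|]. simpl. specialize (H N). lra. Qed.

Lemma Csum_geom_fst K r N : (0 <= r < 1)%R -> (0 <= K)%R ->
  (fst (Csum (fun k => RC (K * r ^ k)) N) <= K / (1 - r))%R.
Proof. intros Hr HK.
 assert (E : forall N, fst (Csum (fun k => RC (K * r ^ k)) N) = (K * (1 - r ^ N) / (1 - r))%R).
 { induction N0; simpl; [field; lra|]. simpl in IHN0. rewrite IHN0. field. lra. }
 rewrite E. unfold Rdiv. rewrite Rmult_assoc. apply Rmult_le_compat_l; auto.
 pose proof (pow_le r N (proj1 Hr)). rewrite <- (Rmult_1_l (/ (1 - r))) at 2.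
 apply Rmult_le_compat_r; [left; apply Rinv_0_lt_compat|]; lra. Qed.

Definition conv (f g : nat -> Complex.C) n := Csum (fun k => f k * g (n - k)%nat) (S n).
(** Shift of a sequence: [sh f = (0, f 0, f 1, ...)], i.e. multiplication by [z]. *)
Definition sh (f : nat -> Complex.C) k := match k with O => RC 0 | S k' => f k' end.

Lemma conv_ext f f' g g' n : (forall k, (k <= n)%nat -> f k = f' k) ->
  (forall k, (k <= n)%nat -> g k = g' k) -> conv f g n = conv f' g' n.
Proof. intros Hf Hg. unfold conv. apply Csum_ext. intros k Hk. rewrite Hf, Hg by lia. reflexivity. Qed.
Lemma conv_sh_l f g n : conv (sh f) g (S n) = conv f g n.
Proof. unfold conv. rewrite Csum_first. simpl sh.
 rewrite (Csum_ext (fun k => f k * g (S n - S k)%nat) (fun k => f k * g (n - k)%nat)) by reflexivity.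
 cring. Qed.
Lemma conv_sh_r f g n : conv f (sh g) (S n) = conv f g n.
Proof. unfold conv. rewrite Csum_S. replace (S n - S n)%nat with O by lia. simpl sh.
 rewrite (Csum_ext (fun k => f k * sh g (S n - k)%nat) (fun k => f k * g (n - k)%nat)); [cring|].
 intros k Hk. replace (S n - k)%nat with (S (n - k)) by lia. reflexivity. Qed.
Lemma conv_plus_l f1 f2 g n : conv (fun k => f1 k + f2 k) g n = conv f1 g n + conv f2 g n.
Proof. unfold conv. rewrite <- Csum_plus. apply Csum_ext. intros; cring. Qed.
Lemma conv_plus_r f g1 g2 n : conv f (fun k => g1 k + g2 k) n = conv f g1 n + conv f g2 n.
Proof. unfold conv. rewrite <- Csum_plus. apply Csum_ext. intros; cring. Qed.
Lemma conv_scal_l c f g n : conv (fun k => c * f k) g n = c * conv f g n.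
Proof. unfold conv. rewrite <- Csum_scal. apply Csum_ext. intros; cring. Qed.
Lemma conv_scal_r c f g n : conv f (fun k => c * g k) n = c * conv f g n.
Proof. unfold conv. rewrite <- Csum_scal. apply Csum_ext. intros; cring. Qed.

Lemma Cpow_add (x : Complex.C) a b : x ^ (a + b) = x ^ a * x ^ b.
Proof. induction a; simpl; [cring|]. rewrite IHa. cring. Qed.
Lemma Cpow_mult_l (a b : Complex.C) k : (a * b) ^ k = a ^ k * b ^ k.
Proof. induction k; simpl; [cring|]. rewrite IHk. cring. Qed.

Lemma conv_geom (x : Complex.C) f g n :
  conv (fun k => x ^ k * f k) (fun k => x ^ k * g k) n = x ^ n * conv f g n.
Proof. unfold conv. rewrite <- Csum_scal. apply Csum_ext. intros k Hk.
 replace n with (k + (n - k))%nat at 3 by lia. rewrite Cpow_add. cring. Qed.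
End FiniteSums.

Section ComplexLimits.
Local Open Scope C_scope.

Lemma Cconv_unique u l1 l2 : Cconv u l1 -> Cconv u l2 -> l1 = l2.
Proof. intros [a b] [c d]. apply injective_projections; eapply UL_sequence; eauto. Qed.
Lemma Clim_eq u l : Cconv u l -> Clim u = l.
Proof. intros H. unfold Clim. apply Cconv_unique with u; [|exact H].
 apply (epsilon_spec (inhabits Czero) (fun l => Cconv u l)). eauto. Qed.

Lemma Cconv_ext u v l : (forall n, u n = v n) -> Cconv u l -> Cconv v l.
Proof. intros H [a b]. split; eapply Un_cv_ext; eauto; intros n; simpl; rewrite H; auto. Qed.
Lemma Cconv_lim_eq u l l' : l = l' -> Cconv u l -> Cconv u l'.
Proof. intros ->; auto. Qed.
Lemma Cconv_S' u l : Cconv u l -> Cconv (fun n => u (S n)) l.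
Proof. intros [a b]; split; apply (Un_cv_S' (fun n => _ (u n))); auto. Qed.
Lemma Cconv_shift u l k : Cconv (fun n => u (n + k)%nat) l -> Cconv u l.
Proof. intros [a b]; split; eapply Un_cv_shift; eauto. Qed.
Lemma Cconv_const c : Cconv (fun _ => c) c.
Proof. split; apply Un_cv_const. Qed.

Lemma Cconv_plus u v l m : Cconv u l -> Cconv v m -> Cconv (fun n => u n + v n) (l + m).
Proof. intros [a b] [c d]. split; simpl.
 - apply (CV_plus (fun n => fst (u n)) (fun n => fst (v n))); auto.
 - apply (CV_plus (fun n => snd (u n)) (fun n => snd (v n))); auto. Qed.
Lemma Cconv_mult u v l m : Cconv u l -> Cconv v m -> Cconv (fun n => u n * v n) (l * m).
Proof. intros [a b] [c d]. split; simpl.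
 - apply (CV_minus (fun n => fst (u n) * fst (v n)) (fun n => snd (u n) * snd (v n)))%R;
   apply CV_mult; auto.
 - apply (CV_plus (fun n => fst (u n) * snd (v n)) (fun n => snd (u n) * fst (v n)))%R;
   apply CV_mult; auto. Qed.
Lemma Cconv_scal c u l : Cconv u l -> Cconv (fun n => c * u n) (c * l).
Proof. intros H. apply Cconv_mult; auto. apply Cconv_const. Qed.
Lemma Cconv_opp u l : Cconv u l -> Cconv (fun n => - u n) (- l).
Proof. intros [a b]. split; simpl.
 - apply (Un_cv_ext (opp_seq (fun n => fst (u n)))); [reflexivity|]. apply CV_opp; auto.
 - apply (Un_cv_ext (opp_seq (fun n => snd (u n)))); [reflexivity|]. apply CV_opp; auto. Qed.
Lemma Cconv_minus u v l m : Cconv u l -> Cconv v m -> Cconv (fun n => u n - v n) (l - m).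
Proof. intros. apply Cconv_plus; auto. apply Cconv_opp; auto. Qed.

Lemma fst_le_Cmod z : (Rabs (fst z) <= Cmod z)%R.
Proof. pose proof (Rmax_Cmod z). pose proof (Rmax_l (Rabs (fst z)) (Rabs (snd z))). lra. Qed.
Lemma snd_le_Cmod z : (Rabs (snd z) <= Cmod z)%R.
Proof. pose proof (Rmax_Cmod z). pose proof (Rmax_r (Rabs (fst z)) (Rabs (snd z))). lra. Qed.

Lemma Cconv_mod0 u (e : nat -> R) :
  (forall n, Cmod (u n) <= e n)%R -> Un_cv e 0 -> Cconv u (RC 0).
Proof. intros H He. split; intros eps Heps; destruct (He eps Heps) as [N HN]; exists N;
 intros n Hn; specialize (HN n Hn); specialize (H n); unfold Rdist in *; simpl;
 rewrite Rminus_0_r in *.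
 - pose proof (fst_le_Cmod (u n)). pose proof (Rle_abs (e n)). lra.
 - pose proof (snd_le_Cmod (u n)). pose proof (Rle_abs (e n)). lra. Qed.

(** Closeness to [c] passes to the limit, up to the factor [sqrt 2] of
    componentwise convergence. *)
Lemma Cconv_mod_bound u l c B :
  Cconv u l -> (forall n, Cmod (u n - c) <= B)%R -> (Cmod (l - c) <= sqrt 2 * B)%R.
Proof. intros [a b] H.
 assert (H1 : (Rabs (fst l - fst c) <= B)%R).
 { apply (Un_cv_abs_bound (fun n => fst (u n))); auto. intros n.
   replace (fst (u n) - fst c)%R with (fst (u n - c)) by (simpl; ring).
   eapply Rle_trans; [apply fst_le_Cmod|apply H]. }
 assert (H2 : (Rabs (snd l - snd c) <= B)%R).
 { apply (Un_cv_abs_bound (fun n => snd (u n))); auto. intros n.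
   replace (snd (u n) - snd c)%R with (snd (u n - c)) by (simpl; ring).
   eapply Rle_trans; [apply snd_le_Cmod|apply H]. }
 eapply Rle_trans; [apply Cmod_2Rmax|]. apply Rmult_le_compat_l; [apply sqrt_pos|].
 apply Rmax_lub; [replace (fst (l - c)) with (fst l - fst c)%R by (simpl; ring)
                 |replace (snd (l - c)) with (snd l - snd c)%R by (simpl; ring)]; lra. Qed.

Lemma Cconv_nonzero u l L :
  Cconv u l -> (0 < L)%R -> (forall n, L <= Cmod (u n))%R -> l <> RC 0.
Proof. intros [a b] HL H Hl. subst l. simpl in a, b.
 destruct (a (L/2)%R) as [N1 H1]; [lra|]. destruct (b (L/2)%R) as [N2 H2]; [lra|].
 set (m := (N1 + N2)%nat).
 specialize (H1 m ltac:(unfold m; lia)). specialize (H2 m ltac:(unfold m; lia)).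
 unfold Rdist in *. rewrite Rminus_0_r in *. specialize (H m).
 pose proof (Cmod_2Rmax (u m)). pose proof sqrt2_lt_2. pose proof (sqrt_pos 2).
 assert (Rmax (Rabs (fst (u m))) (Rabs (snd (u m))) < L/2)%R by (apply Rmax_lub_lt; lra).
 pose proof (Rmax_Cmod (u m)). pose proof (Cmod_ge_0 (u m)). nra. Qed.

Lemma Cconv_Csum_of f la lb : infinite_sum (fun k => fst (f k)) la ->
  infinite_sum (fun k => snd (f k)) lb -> Cconv (Csum f) (la, lb).
Proof. intros Ha Hb. split; apply Un_cv_S.
 - eapply Un_cv_ext; [|exact Ha]. intros n. cbv beta. rewrite Csum_fst. reflexivity.
 - eapply Un_cv_ext; [|exact Hb]. intros n. cbv beta. rewrite Csum_snd. reflexivity. Qed.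
Lemma Cconv_Csum_to f l : Cconv (Csum f) l ->
  infinite_sum (fun k => fst (f k)) (fst l) /\ infinite_sum (fun k => snd (f k)) (snd l).
Proof. intros [a b]. split.
 - eapply Un_cv_ext; [|apply (Un_cv_S' (fun n => fst (Csum f n))); exact a].
   intros n. cbv beta. rewrite Csum_fst. reflexivity.
 - eapply Un_cv_ext; [|apply (Un_cv_S' (fun n => snd (Csum f n))); exact b].
   intros n. cbv beta. rewrite Csum_snd. reflexivity. Qed.

Lemma Cseries_geom_dom f K r : (0 <= r < 1)%R -> (forall k, Cmod (f k) <= K * r ^ k)%R ->
  exists l, Cconv (Csum f) l.
Proof. intros Hr H.
 destruct (ex_series_geom_dom (fun k => fst (f k)) K r Hr) as [la Ha].
 { intros k. eapply Rle_trans; [apply fst_le_Cmod|apply H]. }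
 destruct (ex_series_geom_dom (fun k => snd (f k)) K r Hr) as [lb Hb].
 { intros k. eapply Rle_trans; [apply snd_le_Cmod|apply H]. }
 exists (la, lb). apply Cconv_Csum_of; apply is_series_Reals; auto. Qed.

Lemma Cauchy_product f g F G K r : (0 <= r < 1)%R ->
  (forall k, Cmod (f k) <= K * r ^ k)%R -> (forall k, Cmod (g k) <= K * r ^ k)%R ->
  Cconv (Csum f) F -> Cconv (Csum g) G -> Cconv (Csum (conv f g)) (F * G).
Proof. intros Hr Hf Hg SF SG.
 destruct (Cconv_Csum_to _ _ SF) as [F1 F2]. destruct (Cconv_Csum_to _ _ SG) as [G1 G2].
 assert (B1 : forall (h : nat -> Complex.C) k, (Cmod (h k) <= K * r ^ k ->
                Rabs (fst (h k)) <= K * r ^ k)%R).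
 { intros h k H. eapply Rle_trans; [apply fst_le_Cmod|auto]. }
 assert (B2 : forall (h : nat -> Complex.C) k, (Cmod (h k) <= K * r ^ k ->
                Rabs (snd (h k)) <= K * r ^ k)%R).
 { intros h k H. eapply Rle_trans; [apply snd_le_Cmod|auto]. }
 pose proof (real_cauchy_product _ _ _ _ K r Hr (fun k => B1 f k (Hf k)) (fun k => B1 g k (Hg k)) F1 G1) as RR.
 pose proof (real_cauchy_product _ _ _ _ K r Hr (fun k => B2 f k (Hf k)) (fun k => B2 g k (Hg k)) F2 G2) as II.
 pose proof (real_cauchy_product _ _ _ _ K r Hr (fun k => B1 f k (Hf k)) (fun k => B2 g k (Hg k)) F1 G2) as RI.
 pose proof (real_cauchy_product _ _ _ _ K r Hr (fun k => B2 f k (Hf k)) (fun k => B1 g k (Hg k)) F2 G1) as IR.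
 destruct F as [Fr Fi]. destruct G as [Gr Gi]. simpl in *.
 apply Cconv_Csum_of.
 - eapply infinite_sum_ext; [|apply (infinite_sum_minus _ _ _ _ RR II)].
   intros n. unfold conv. rewrite Csum_fst, <- minus_sum. apply sum_eq. intros. reflexivity.
 - eapply infinite_sum_ext; [|apply (infinite_sum_plus _ _ _ _ RI IR)].
   intros n. unfold conv. rewrite Csum_snd, <- plus_sum. apply sum_eq. intros. reflexivity.
Qed.

Lemma Cseries_finite_sum (F : nat -> nat -> Complex.C) (L : nat -> Complex.C) M :
  (forall j, (j < M)%nat -> Cconv (Csum (F j)) (L j)) ->
  Cconv (Csum (fun k => Csum (fun j => F j k) M)) (Csum L M).
Proof. induction M; intros H.
 - eapply Cconv_ext; [|apply (Cconv_const (RC 0))]. intros N. cbv beta. symmetry.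
   apply Csum_zero. intros; reflexivity.
 - eapply Cconv_ext; [|apply Cconv_plus; [apply IHM; intros; apply H; lia|apply (H M); lia]].
   intros N. cbv beta. rewrite <- Csum_plus. apply Csum_ext. intros k _. reflexivity. Qed.
End ComplexLimits.

Lemma qpoch_O x q : qpoch x q 0 = RC 1.
Proof. reflexivity. Qed.
Lemma qpoch_S x q k : qpoch x q (S k) = (qpoch x q k * (RC 1 - x * RC (q ^ k)))%C.
Proof. reflexivity. Qed.
Lemma qpoch_add x q j m : qpoch x q (j + m) = (qpoch x q j * qpoch (x * RC (q ^ j)) q m)%C.
Proof. induction m.
 - rewrite Nat.add_0_r, qpoch_O. cring.
 - rewrite Nat.add_succ_r, !qpoch_S, IHm, pow_add, RtoC_mult. cring. Qed.
Lemma qpoch_front x q k : qpoch x q (S k) = ((RC 1 - x) * qpoch (x * RC q) q k)%C.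
Proof. induction k.
 - rewrite qpoch_S, !qpoch_O. change (q ^ 0) with 1. cring.
 - rewrite qpoch_S, IHk, qpoch_S. simpl pow. rewrite RtoC_mult. cring. Qed.
Lemma qpoch_zero_arg q k : qpoch Czero q k = RC 1.
Proof. induction k; [reflexivity|]. rewrite qpoch_S, IHk. toC. cring. Qed.
Lemma qpoch_nz x q k : (forall j, (j < k)%nat -> (RC 1 - x * RC (q ^ j))%C <> RC 0) ->
  qpoch x q k <> RC 0.
Proof. induction k; intros H.
 - simpl. intros E. injection E. lra.
 - rewrite qpoch_S. apply Cmult_neq_0; auto. Qed.

Lemma RC_neq x y : x <> y -> RC x <> RC y.
Proof. intros H E. injection E. auto. Qed.
Lemma Cmod_RC x : Cmod (RC x) = Rabs x.
Proof. apply Cmod_R. Qed.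
Lemma Cmod_1_minus_le w : Cmod (RC 1 - w)%C <= 1 + Cmod w.
Proof. eapply Rle_trans; [apply Cmod_triangle|]. rewrite Cmod_opp, Cmod_RC, Rabs_R1. lra. Qed.
Lemma Cmod_1_minus_ge w : 1 - Cmod w <= Cmod (RC 1 - w)%C.
Proof. pose proof (Cmod_triangle (RC 1 - w)%C w).
 replace (RC 1 - w + w)%C with (RC 1) in H by cring. rewrite Cmod_RC, Rabs_R1 in H. lra. Qed.
Lemma Cmod_xq x q j : 0 < q -> Cmod (x * RC (q ^ j))%C = Cmod x * q ^ j.
Proof. intros Hq. rewrite Cmod_mult, Cmod_RC, Rabs_pos_eq; auto. apply pow_le; lra. Qed.

Section QPochhammerLimits.
Variable q : R.
Hypothesis Hq : 0 < q < 1.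

Lemma qq_factor_nz j : (RC 1 - RC q * RC (q ^ j))%C <> RC 0.
Proof. rewrite <- RtoC_mult, <- RtoC_minus. apply RC_neq.
 pose proof (pow_le1 q j). pose proof (pow_le q j). nra. Qed.
Lemma qq_nz k : qpoch (RC q) q k <> RC 0.
Proof. apply qpoch_nz. intros j _. apply qq_factor_nz. Qed.
Lemma one_minus_qpow_nz k : (RC 1 - RC (q ^ S k))%C <> RC 0.
Proof. rewrite <- RtoC_minus. apply RC_neq.
 pose proof (pow_le1 q k). pose proof (pow_le q k). simpl. nra. Qed.

Lemma qpoch_upper x k : Cmod (qpoch x q k) <= exp (Cmod x / (1 - q)).
Proof.
 assert (H : Cmod (qpoch x q k) <= exp (Cmod x * ((1 - q ^ k) / (1 - q)))).
 { induction k.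
   - simpl. change (Cmod (RC 1) <= exp (Cmod x * ((1 - 1) / (1 - q)))).
     rewrite Cmod_RC, Rabs_R1. replace (Cmod x * ((1 - 1) / (1 - q))) with 0 by (field; lra).
     rewrite exp_0. lra.
   - rewrite qpoch_S, Cmod_mult.
     replace (Cmod x * ((1 - q ^ S k) / (1 - q)))
       with (Cmod x * ((1 - q ^ k) / (1 - q)) + Cmod x * q ^ k) by (simpl; field; lra).
     rewrite exp_plus. apply Rmult_le_compat; try apply Cmod_ge_0; auto.
     eapply Rle_trans; [apply Cmod_1_minus_le|]. rewrite Cmod_xq by lra.
     apply exp_ineq1_le. }
 eapply Rle_trans; [exact H|]. apply exp_le.
 assert (0 < / (1 - q)) by (apply Rinv_0_lt_compat; lra).
 assert (0 <= Cmod x * q ^ k * / (1 - q)).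
 { apply Rmult_le_pos; [apply Rmult_le_pos; [apply Cmod_ge_0|apply pow_le; lra]|lra]. }
 unfold Rdiv. lra. Qed.

Lemma qpoch_lower x k : Cmod x < 1 ->
  exp (- (Cmod x / ((1 - q) * (1 - Cmod x)))) <= Cmod (qpoch x q k).
Proof. intros Hx. pose proof (Cmod_ge_0 x) as Hx0.
 assert (H : exp (- (Cmod x * ((1 - q ^ k) / (1 - q)) / (1 - Cmod x))) <= Cmod (qpoch x q k)).
 { induction k.
   - simpl. change (exp (- (Cmod x * ((1 - 1) / (1 - q)) / (1 - Cmod x))) <= Cmod (RC 1)).
     rewrite Cmod_RC, Rabs_R1.
     replace (- (Cmod x * ((1 - 1) / (1 - q)) / (1 - Cmod x))) with 0 by (field; lra).
     rewrite exp_0. lra.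
   - rewrite qpoch_S, Cmod_mult.
     replace (- (Cmod x * ((1 - q ^ S k) / (1 - q)) / (1 - Cmod x))) with
       (- (Cmod x * ((1 - q ^ k) / (1 - q)) / (1 - Cmod x)) + - (Cmod x * q ^ k / (1 - Cmod x)))
       by (simpl; field; lra).
     rewrite exp_plus. apply Rmult_le_compat; try (left; apply exp_pos); auto.
     eapply Rle_trans; [|apply Cmod_1_minus_ge]. rewrite Cmod_xq by lra.
     apply one_minus_ge_exp; auto. pose proof (pow_le q k).
     assert (q ^ k <= 1) by (apply pow_le1; lra). split; [apply Rmult_le_pos|]; nra. }
 eapply Rle_trans; [|exact H]. apply exp_le. apply Ropp_le_contravar.
 assert (0 < / (1 - q)) by (apply Rinv_0_lt_compat; lra).
 assert (0 < / (1 - Cmod x)) by (apply Rinv_0_lt_compat; lra).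
 assert (0 <= Cmod x * q ^ k * / (1 - q) * / (1 - Cmod x)).
 { repeat apply Rmult_le_pos; try lra. apply pow_le; lra. }
 unfold Rdiv. rewrite Rinv_mult. lra. Qed.

Lemma qpoch_as_sum x k :
  qpoch x q k = (RC 1 + Csum (fun j => - (qpoch x q j * (x * RC (q ^ j)))) k)%C.
Proof. induction k.
 - simpl. apply injective_projections; simpl; ring.
 - rewrite qpoch_S, Csum_S, IHk. cring. Qed.

(** [(x;q)_k -> (x;q)_oo]: the telescoping series is geometrically dominated. *)
Lemma qpoch_conv x : Cconv (fun k => qpoch x q k) (qpoch_inf x q).
Proof.
 destruct (Cseries_geom_dom (fun j => - (qpoch x q j * (x * RC (q ^ j))))%C
             (exp (Cmod x / (1 - q)) * Cmod x) q) as [l Hl]; [lra| |].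
 - intros k. rewrite Cmod_opp, Cmod_mult, Cmod_xq, <- Rmult_assoc by lra.
   apply Rmult_le_compat_r; [apply pow_le; lra|]. apply Rmult_le_compat_r; [apply Cmod_ge_0|].
   apply qpoch_upper.
 - assert (H : Cconv (fun k => qpoch x q k) (RC 1 + l)%C).
   { eapply Cconv_ext; [|apply Cconv_plus; [apply Cconv_const|exact Hl]].
     intros n. simpl. rewrite (qpoch_as_sum x n). reflexivity. }
   unfold qpoch_inf. rewrite (Clim_eq _ _ H). exact H. Qed.

Lemma qpoch_inf_split x j : qpoch_inf x q = (qpoch x q j * qpoch_inf (x * RC (q ^ j)) q)%C.
Proof. apply (Cconv_unique (fun k => qpoch x q k)); [apply qpoch_conv|].
 apply Cconv_shift with (k := j).
 eapply Cconv_ext; [|apply Cconv_scal; apply qpoch_conv].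
 intros m. simpl. rewrite Nat.add_comm, qpoch_add. reflexivity. Qed.

Lemma qpoch_inf_nz x : Cmod x < 1 -> qpoch_inf x q <> RC 0.
Proof. intros Hx. eapply Cconv_nonzero; [apply qpoch_conv|apply exp_pos|].
 intros n. apply qpoch_lower; auto. Qed.

Lemma qpoch_nz_small x j : Cmod x < 1 -> qpoch x q j <> RC 0.
Proof. intros Hx E. apply (qpoch_inf_nz x Hx). rewrite (qpoch_inf_split x j), E. cring. Qed.
End QPochhammerLimits.

(** The sum [S(z)] satisfies [(1-z) S(z) = (1-Az) S(qz)]; iterating and using
    [S(q^m z) -> S(0) = 1] identifies it with the product. *)
Section QBinomial.
Variables (q : R) (A : Complex.C).
Hypothesis Hq : 0 < q < 1.

Definition qbin_coeff k := (qpoch A q k / qpoch (RC q) q k)%C.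
(** A uniform bound on the coefficients, from the bounds on q-products. *)
Definition qbin_bound := exp (Cmod A / (1 - q)) / exp (- (q / ((1 - q) * (1 - q)))).

Lemma qbin_bound_pos : 0 < qbin_bound.
Proof. unfold qbin_bound, Rdiv.
 apply Rmult_lt_0_compat; [apply exp_pos|apply Rinv_0_lt_compat, exp_pos]. Qed.

Lemma qbin_coeff_bound k : Cmod (qbin_coeff k) <= qbin_bound.
Proof. unfold qbin_coeff, qbin_bound. rewrite Cmod_div by (apply qq_nz; auto).
 pose proof (qpoch_upper q Hq A k).
 assert (L : exp (- (q / ((1 - q) * (1 - q)))) <= Cmod (qpoch (RC q) q k)).
 { pose proof (qpoch_lower q Hq (RC q) k) as Hl. rewrite Cmod_RC, Rabs_pos_eq in Hl by lra.
   apply Hl. lra. }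
 pose proof (exp_pos (- (q / ((1 - q) * (1 - q))))).
 unfold Rdiv. apply Rmult_le_compat; auto; [apply Cmod_ge_0|left; apply Rinv_0_lt_compat; lra|].
 apply Rinv_le_contravar; auto. Qed.

Lemma qbin_coeff_0 : qbin_coeff 0 = RC 1.
Proof. unfold qbin_coeff. simpl. apply injective_projections; simpl; field. Qed.

Lemma qbin_coeff_rec k :
  (qbin_coeff (S k) * (RC 1 - RC (q ^ S k)) = qbin_coeff k * (RC 1 - A * RC (q ^ k)))%C.
Proof. unfold qbin_coeff. rewrite !qpoch_S.
 assert (H1 := qq_nz q Hq k). assert (H2 := qq_factor_nz q Hq k).
 replace (RC (q ^ S k)) with (RC q * RC (q ^ k))%C by (simpl; rewrite RtoC_mult; reflexivity).
 cfield. split; auto. Qed.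

Lemma qbin_coeff_S k :
  qbin_coeff (S k) = (qbin_coeff k * (RC 1 - A * RC (q ^ k)) / (RC 1 - RC (q ^ S k)))%C.
Proof. rewrite <- qbin_coeff_rec. pose proof (one_minus_qpow_nz q Hq k). cfield. auto. Qed.

Definition qbin_partial (w : Complex.C) N := Csum (fun k => qbin_coeff k * w ^ k)%C N.

Lemma qbin_partial_diff z N :
  ((RC 1 - z) * qbin_partial z N - (RC 1 - A * z) * qbin_partial (RC q * z) N
   = - (qbin_coeff N * (RC 1 - RC (q ^ N)) * z ^ N))%C.
Proof. induction N.
 - unfold qbin_partial, qbin_coeff. simpl. apply injective_projections; simpl; field.
 - unfold qbin_partial in *. rewrite !Csum_S.
   transitivity ((((RC 1 - z) * Csum (fun k => qbin_coeff k * z ^ k) N -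
     (RC 1 - A * z) * Csum (fun k => qbin_coeff k * (RC q * z) ^ k) N) +
     ((RC 1 - z) * qbin_coeff N * z ^ N - (RC 1 - A * z) * qbin_coeff N * (RC q * z) ^ N))%C);
     [cring|].
   rewrite IHN, Cpow_mult_l, <- RtoC_pow.
   transitivity (- ((qbin_coeff (S N) * (RC 1 - RC (q ^ S N))) * z ^ S N))%C; [|cring].
   rewrite qbin_coeff_rec. simpl. cring. Qed.

Lemma qbin_partial_conv w : Cmod w < 1 -> exists l, Cconv (qbin_partial w) l.
Proof. intros Hw. apply (Cseries_geom_dom _ qbin_bound (Cmod w)); [split; [apply Cmod_ge_0|auto]|].
 intros k. rewrite Cmod_mult, Cmod_pow. apply Rmult_le_compat_r; [apply pow_le, Cmod_ge_0|].
 apply qbin_coeff_bound. Qed.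

Definition qbin_sum w := Clim (qbin_partial w).

Lemma qbin_sum_conv w : Cmod w < 1 -> Cconv (qbin_partial w) (qbin_sum w).
Proof. intros Hw. destruct (qbin_partial_conv w Hw) as [l Hl].
 unfold qbin_sum. rewrite (Clim_eq _ _ Hl). auto. Qed.

Lemma Cmod_scale_q z : Cmod (RC q * z)%C = q * Cmod z.
Proof. rewrite Cmod_mult, Cmod_RC, Rabs_pos_eq; lra. Qed.

Lemma qbin_sum_functional z : Cmod z < 1 ->
  ((RC 1 - z) * qbin_sum z = (RC 1 - A * z) * qbin_sum (RC q * z))%C.
Proof. intros Hz.
 assert (Hqz : Cmod (RC q * z)%C < 1) by (rewrite Cmod_scale_q; pose proof (Cmod_ge_0 z); nra).
 set (d := fun N => ((RC 1 - z) * qbin_partial z N - (RC 1 - A * z) * qbin_partial (RC q * z) N)%C).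
 assert (H1 : Cconv d ((RC 1 - z) * qbin_sum z - (RC 1 - A * z) * qbin_sum (RC q * z))%C).
 { apply Cconv_minus; apply Cconv_scal; apply qbin_sum_conv; auto. }
 assert (H2 : Cconv d (RC 0)).
 { eapply Cconv_ext; [intros N; symmetry; apply qbin_partial_diff|].
   apply Cconv_mod0 with (e := fun N => qbin_bound * Cmod z ^ N).
   - intros N. rewrite Cmod_opp, !Cmod_mult, Cmod_pow, <- RtoC_minus, Cmod_RC.
     pose proof (qbin_coeff_bound N). pose proof (pow_le1 q N). pose proof (pow_le q N).
     rewrite Rabs_pos_eq by lra. pose proof (Cmod_ge_0 (qbin_coeff N)).
     pose proof (pow_le (Cmod z) N (Cmod_ge_0 z)).
     apply Rmult_le_compat_r; auto. nra.
   - replace 0 with (qbin_bound * 0) by ring. apply (CV_mult (fun _ => qbin_bound)).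
     + apply Un_cv_const.
     + apply Un_cv_geom. split; [apply Cmod_ge_0|auto]. }
 pose proof (Cconv_unique _ _ _ H1 H2) as E. apply Ceq_minus. rewrite E. reflexivity. Qed.

Lemma qbin_sum_near_1 w : Cmod w < 1 ->
  Cmod (qbin_sum w - RC 1)%C <= sqrt 2 * (qbin_bound * Cmod w / (1 - Cmod w)).
Proof. intros Hw. pose proof (Cmod_ge_0 w).
 apply (Cconv_mod_bound (fun N => qbin_partial w (S N))).
 { apply (Cconv_S' (qbin_partial w)). apply qbin_sum_conv; auto. }
 intros N. unfold qbin_partial. rewrite Csum_first, qbin_coeff_0.
 replace (RC 1 * w ^ 0 + Csum (fun k => qbin_coeff (S k) * w ^ S k) N - RC 1)%C
   with (Csum (fun k => qbin_coeff (S k) * w ^ S k) N)%C by (simpl; cring).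
 eapply Rle_trans; [apply (Csum_mod_le _ (fun k => qbin_bound * Cmod w * Cmod w ^ k))|].
 - intros k. rewrite Cmod_mult, Cmod_pow. simpl. rewrite <- Rmult_assoc.
   apply Rmult_le_compat_r; [apply pow_le; auto|]. apply Rmult_le_compat_r; auto.
   apply qbin_coeff_bound.
 - apply Csum_geom_fst; [split; auto|]. pose proof qbin_bound_pos. nra. Qed.

Lemma qbin_sum_qpow_to_1 z : Cmod z < 1 -> Cconv (fun m => qbin_sum (RC (q ^ m) * z))%C (RC 1).
Proof. intros Hz. pose proof (Cmod_ge_0 z).
 set (K := sqrt 2 * (qbin_bound * Cmod z / (1 - Cmod z))).
 assert (H0 : Cconv (fun m => qbin_sum (RC (q ^ m) * z) - RC 1)%C (RC 0)).
 { apply Cconv_mod0 with (e := fun m => K * q ^ m).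
   - intros m. pose proof (pow_le1 q m). pose proof (pow_le q m). pose proof qbin_bound_pos.
     assert (Hm : Cmod (RC (q ^ m) * z)%C = q ^ m * Cmod z).
     { rewrite Cmod_mult, Cmod_RC, Rabs_pos_eq; lra. }
     eapply Rle_trans; [apply qbin_sum_near_1; rewrite Hm; nra|].
     rewrite Hm. unfold K. rewrite Rmult_assoc. apply Rmult_le_compat_l; [apply sqrt_pos|].
     unfold Rdiv.
     assert (0 < / (1 - q ^ m * Cmod z)) by (apply Rinv_0_lt_compat; nra).
     assert (/ (1 - q ^ m * Cmod z) <= / (1 - Cmod z)) by (apply Rinv_le_contravar; nra).
     assert (0 <= qbin_bound * q ^ m * Cmod z) by (apply Rmult_le_pos; [nra|auto]).
     replace (qbin_bound * (q ^ m * Cmod z) * / (1 - q ^ m * Cmod z))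
       with ((qbin_bound * q ^ m * Cmod z) * / (1 - q ^ m * Cmod z)) by ring.
     replace (qbin_bound * Cmod z * / (1 - Cmod z) * q ^ m)
       with ((qbin_bound * q ^ m * Cmod z) * / (1 - Cmod z)) by ring.
     apply Rmult_le_compat_l; auto.
   - replace 0 with (K * 0) by ring. apply (CV_mult (fun _ => K)); [apply Un_cv_const|].
     apply Un_cv_geom. lra. }
 eapply Cconv_lim_eq; [|eapply Cconv_ext; [|apply (Cconv_plus _ _ _ _ H0 (Cconv_const (RC 1)))]].
 - cring.
 - intros m. cbv beta. cring. Qed.

Lemma qbin_sum_iterate z m : Cmod z < 1 ->
  (qpoch z q m * qbin_sum z = qpoch (A * z) q m * qbin_sum (RC (q ^ m) * z))%C.
Proof. intros Hz. induction m.
 - rewrite !qpoch_O. change (q ^ 0) with 1. replace (RC 1 * z)%C with z by cring. cring.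
 - assert (Hw : Cmod (RC (q ^ m) * z)%C < 1).
   { rewrite Cmod_mult, Cmod_RC, Rabs_pos_eq by (apply pow_le; lra).
     pose proof (pow_le1 q m). pose proof (pow_le q m). pose proof (Cmod_ge_0 z). nra. }
   rewrite !qpoch_S.
   transitivity ((qpoch z q m * qbin_sum z) * (RC 1 - RC (q ^ m) * z))%C; [cring|].
   rewrite IHm.
   transitivity (qpoch (A * z) q m * ((RC 1 - RC (q ^ m) * z) * qbin_sum (RC (q ^ m) * z)))%C;
     [cring|].
   rewrite qbin_sum_functional by auto.
   replace (RC q * (RC (q ^ m) * z))%C with (RC (q ^ S m) * z)%C
     by (simpl; rewrite RtoC_mult; cring).
   cring. Qed.

Theorem q_binomial z : Cmod z < 1 ->
  Cconv (qbin_partial z) (qpoch_inf (A * z) q / qpoch_inf z q)%C.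
Proof. intros Hz.
 assert (E : (qpoch_inf z q * qbin_sum z = qpoch_inf (A * z) q * RC 1)%C).
 { apply (Cconv_unique (fun m => qpoch z q m * qbin_sum z)%C).
   - apply Cconv_mult; [apply qpoch_conv; auto|apply Cconv_const].
   - eapply Cconv_ext; [intros m; symmetry; apply qbin_sum_iterate; auto|].
     apply Cconv_mult; [apply qpoch_conv; auto|apply qbin_sum_qpow_to_1; auto]. }
 pose proof (qpoch_inf_nz q Hq z Hz).
 replace (qpoch_inf (A * z) q / qpoch_inf z q)%C with (qbin_sum z).
 - apply qbin_sum_conv; auto.
 - transitivity ((qpoch_inf z q * qbin_sum z) / qpoch_inf z q)%C; [cfield; auto|].
   rewrite E. cfield; auto. Qed.
End QBinomial.

(** ** The Al-Salam--Chihara three-term recurrence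
    For [x = (u + 1/u)/2], the normalized polynomials [r_n = Q_n/(q;q)_n]
    satisfy
    [(1 - q^{n+2}) r_{n+2} = (u + 1/u - (c1+c2) q^{n+1}) r_{n+1} - (1 - c1c2 q^n) r_n];
    a solution is determined by [r_0] and [r_1]. *)
Section Recurrence.
Local Open Scope C_scope.
Variables (q : R) (u c1 c2 : Complex.C).
Hypothesis Hq : (0 < q < 1)%R.

Definition asc_recurrence (r : nat -> Complex.C) : Prop :=
  forall n, r (S (S n)) * (RC 1 - RC (q ^ S (S n))) =
    (u + / u - (c1 + c2) * RC (q ^ S n)) * r (S n) - (RC 1 - c1 * c2 * RC (q ^ n)) * r n.

Lemma asc_recurrence_unique r r' : asc_recurrence r -> asc_recurrence r' ->
  r 0%nat = r' 0%nat -> r 1%nat = r' 1%nat -> forall n, r n = r' n.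
Proof. intros Hr Hr' E0 E1.
 assert (H : forall n, r n = r' n /\ r (S n) = r' (S n)).
 { induction n as [|n [IH1 IH2]]; [split; auto|]. split; auto.
   pose proof (one_minus_qpow_nz q Hq (S n)) as Hnz.
   transitivity (r (S (S n)) * (RC 1 - RC (q ^ S (S n))) / (RC 1 - RC (q ^ S (S n))));
     [cfield; auto|].
   rewrite Hr, IH1, IH2, <- Hr'. cfield; auto. }
 intros n. apply H. Qed.
End Recurrence.

(** ** Product form: the Cauchy product of two q-binomial series
    [sum (c1/u;q)_k/(q;q)_k (tu)^k] and [sum (c2 u;q)_k/(q;q)_k (t/u)^k] has
    coefficients [t^n P_n] where [P] solves the recurrence.  Each factor
    sequence satisfies a first-order q-difference equation, and the two
    combine under convolution. *)
Section ProductForm.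
Local Open Scope C_scope.
Variables (q : R) (u c1 c2 : Complex.C).
Hypothesis Hq : (0 < q < 1)%R.
Hypothesis Hu : u <> RC 0.

Definition asc_left k := qbin_coeff q (c1 * / u) k * u ^ k.
Definition asc_right k := qbin_coeff q (c2 * u) k * (/ u) ^ k.
Definition asc_product n := conv asc_left asc_right n.

Lemma asc_left_rec k : asc_left k + (- u) * sh asc_left k =
  RC q ^ k * asc_left k + (- c1) * sh (fun j => RC q ^ j * asc_left j) k.
Proof. destruct k.
 - simpl sh. unfold asc_left. rewrite qbin_coeff_0. cring.
 - simpl sh. unfold asc_left. rewrite qbin_coeff_S by auto. rewrite <- !RtoC_pow. simpl.
   rewrite RtoC_mult. pose proof (one_minus_qpow_nz q Hq k) as Hnz. simpl in Hnz.
   rewrite RtoC_mult in Hnz. cfield. auto. Qed.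

Lemma asc_right_rec k : asc_right k + (- / u) * sh asc_right k =
  RC q ^ k * asc_right k + (- c2) * sh (fun j => RC q ^ j * asc_right j) k.
Proof. destruct k.
 - simpl sh. unfold asc_right. rewrite qbin_coeff_0. cring.
 - simpl sh. unfold asc_right. rewrite qbin_coeff_S by auto. rewrite <- !RtoC_pow. simpl.
   rewrite RtoC_mult. pose proof (one_minus_qpow_nz q Hq k) as Hnz. simpl in Hnz.
   rewrite RtoC_mult in Hnz. cfield. auto. Qed.

(** Convolving the two difference equations gives the three-term recurrence. *)
Lemma asc_product_recurrence : asc_recurrence q u c1 c2 asc_product.
Proof. intros n.
 set (qa := fun j => RC q ^ j * asc_left j). set (qb := fun j => RC q ^ j * asc_right j).
 assert (W : conv (fun k => asc_left k + (- u) * sh asc_left k)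
                  (fun k => asc_right k + (- / u) * sh asc_right k) (S (S n))
           = conv (fun k => qa k + (- c1) * sh qa k) (fun k => qb k + (- c2) * sh qb k) (S (S n))).
 { apply conv_ext; intros k _; [apply asc_left_rec|apply asc_right_rec]. }
 rewrite !conv_plus_l, !conv_plus_r, !conv_scal_l, !conv_scal_r, !conv_sh_l, !conv_sh_r in W.
 unfold qa, qb in W. rewrite !conv_geom in W.
 fold (asc_product n) (asc_product (S n)) (asc_product (S (S n))) in W.
 rewrite !RtoC_pow. apply Ceq_minus. apply Ceq_minus in W. rewrite <- W. cfield. auto. Qed.

Lemma asc_product_0 : asc_product 0 = RC 1.
Proof. unfold asc_product, conv. rewrite Csum_S, Csum_O. unfold asc_left, asc_right.
 simpl (0 - 0)%nat. rewrite !qbin_coeff_0. cring. Qed.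

Lemma asc_product_1 : asc_product 1 = (u + / u - c1 - c2) / (RC 1 - RC q).
Proof. unfold asc_product, conv. rewrite !Csum_S, Csum_O. unfold asc_left, asc_right.
 simpl (1 - 0)%nat. simpl (1 - 1)%nat.
 rewrite !qbin_coeff_S, !qbin_coeff_0 by auto. change (q ^ 0)%R with 1%R.
 replace (q ^ 1)%R with q by ring.
 assert (H := one_minus_qpow_nz q Hq 0). replace (q ^ 1)%R with q in H by ring.
 cfield. split; auto. Qed.
End ProductForm.

(** ** Sum form: the normalized 3phi2
    [r_n = sum_{j <= n} g_{n,j} (c1 u, c1/u;q)_j] with
    [g_{n,j} = (c1c2;q)_n/(c1^n (q;q)_n) (q^{-n};q)_j q^j/((q, c1c2;q)_j)]
    also solves the recurrence.  Multiplication by [u + 1/u] acts on the basis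
    [phi_j = (c1 u, c1/u;q)_j] as a two-term operator, and the recurrence reduces
    to a rational identity among neighbouring coefficients [g_{n,j}]. *)

Lemma Cminus_1_nz a : (RC 1 - a)%C <> RC 0 -> (a - RC 1)%C <> RC 0.
Proof. intros H E. apply H. replace (RC 1 - a)%C with (- (a - RC 1))%C by cring. rewrite E. cring. Qed.

Lemma Cone_minus_nz (w : Complex.C) : w <> RC 1 -> (RC 1 - w)%C <> RC 0.
Proof. intros H E. apply H. apply Ceq_minus in E. symmetry. apply Ceq_minus. rewrite <- E. cring. Qed.

Section CoefficientIdentities.
Local Open Scope C_scope.

(** The rational identities behind the recurrence, with the q-products
    abstracted as independent unknowns ([Cm] = normalization, [Y] = the
    [(q^{-n};q)] factor, [W] = weight, [Q = q], [A = q^m], [B = q^i]). *)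
Lemma asc_coeff_identity_alg (Cm Y W c1 c2 Q A B : Complex.C) :
  c1 <> RC 0 -> Q <> RC 0 -> A <> RC 0 -> B <> RC 0 ->
  RC 1 - Q * A <> RC 0 -> RC 1 - Q * (Q * A) <> RC 0 -> RC 1 - Q * B <> RC 0 ->
  RC 1 - c1 * c2 * B <> RC 0 -> RC 1 - / (Q * A) <> RC 0 ->
  let x := / (Q * A) in
  let g2 := Cm * (RC 1 - c1 * c2 * A) * (RC 1 - c1 * c2 * (Q * A))
            / (c1 ^ 2 * (RC 1 - Q * A) * (RC 1 - Q * (Q * A)))
            * ((RC 1 - x / Q) * Y) * (W * Q / ((RC 1 - Q * B) * (RC 1 - c1 * c2 * B))) in
  let g1s := Cm * (RC 1 - c1 * c2 * A) / (c1 * (RC 1 - Q * A)) * (Y * (RC 1 - x * B))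
            * (W * Q / ((RC 1 - Q * B) * (RC 1 - c1 * c2 * B))) in
  let g1 := Cm * (RC 1 - c1 * c2 * A) / (c1 * (RC 1 - Q * A)) * Y * W in
  let g0 := Cm * (Y * (RC 1 - x * B) * (RC 1 - x * (Q * B)) / (RC 1 - x))
            * (W * Q / ((RC 1 - Q * B) * (RC 1 - c1 * c2 * B))) in
  g2 * (RC 1 - Q * (Q * A)) - g1s * (RC 1 + c1 ^ 2 * (Q * B) ^ 2) / (c1 * (Q * B)) + g1 / (c1 * B)
   + (c1 + c2) * (Q * A) * g1s + (RC 1 - c1 * c2 * A) * g0 = RC 0.
Proof. intros. subst x g2 g1s g1 g0. cfield. repeat split; auto using Cminus_1_nz. Qed.

Lemma asc_coeff_identity0_alg (Cm c1 c2 Q A : Complex.C) :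
  c1 <> RC 0 -> RC 1 - Q * A <> RC 0 -> RC 1 - Q * (Q * A) <> RC 0 ->
  let g2 := Cm * (RC 1 - c1 * c2 * A) * (RC 1 - c1 * c2 * (Q * A))
            / (c1 ^ 2 * (RC 1 - Q * A) * (RC 1 - Q * (Q * A))) in
  let g1 := Cm * (RC 1 - c1 * c2 * A) / (c1 * (RC 1 - Q * A)) in
  g2 * (RC 1 - Q * (Q * A)) - g1 * (RC 1 + c1 ^ 2 * RC 1 ^ 2) / (c1 * RC 1) + RC 0
   + (c1 + c2) * (Q * A) * g1 + (RC 1 - c1 * c2 * A) * Cm = RC 0.
Proof. intros. subst g2 g1. cfield. repeat split; auto using Cminus_1_nz. Qed.
End CoefficientIdentities.

Section SumForm.
Local Open Scope C_scope.
Variables (q : R) (u c1 c2 : Complex.C).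
Hypothesis Hq : (0 < q < 1)%R.
Hypothesis Hu : u <> RC 0.
Hypothesis Hc1 : c1 <> RC 0.
Hypothesis Hcc : forall j, RC 1 - c1 * c2 * RC (q ^ j) <> RC 0.

Definition asc_pair j := qpoch (c1 * u) q j * qpoch (c1 * / u) q j.
Definition asc_norm n := qpoch (c1 * c2) q n / (c1 ^ n * qpoch (RC q) q n).
Definition qinv_poch n j := qpoch (RC (/ q ^ n)) q j.
Definition asc_weight j := RC (q ^ j) / (qpoch (RC q) q j * qpoch (c1 * c2) q j).
Definition asc_coeff n j := asc_norm n * qinv_poch n j * asc_weight j.
Definition asc_series n := Csum (fun j => asc_coeff n j * asc_pair j) (S n).

Lemma c1c2_poch_nz n : qpoch (c1 * c2) q n <> RC 0.
Proof. apply qpoch_nz. intros j _. apply Hcc. Qed.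
Lemma RCq_nz : RC q <> RC 0.
Proof. apply RC_neq. lra. Qed.
Lemma RCqpow_nz n : RC (q ^ n) <> RC 0.
Proof. apply RC_neq. apply pow_nonzero. lra. Qed.
Lemma RC_qS n : RC (q ^ S n) = RC q * RC (q ^ n).
Proof. simpl. apply RtoC_mult. Qed.
Lemma RC_qinvS n : RC (/ q ^ S n) = / (RC q * RC (q ^ n)).
Proof. rewrite <- RC_qS. apply RtoC_inv. apply pow_nonzero. lra. Qed.
Lemma qinv_factor_nz n : RC 1 - / (RC q * RC (q ^ n)) <> RC 0.
Proof. rewrite <- RC_qinvS, <- RtoC_minus. apply RC_neq.
 assert (q ^ S n < 1)%R by (pose proof (pow_le1 q n); pose proof (pow_le q n); simpl; nra).
 assert (0 < q ^ S n)%R by (apply pow_lt; lra).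
 assert (1 < / q ^ S n)%R by (rewrite <- Rinv_1; apply Rinv_lt_contravar; lra). lra. Qed.

Lemma asc_norm_S n : asc_norm (S n) =
  asc_norm n * (RC 1 - c1 * c2 * RC (q ^ n)) / (c1 * (RC 1 - RC q * RC (q ^ n))).
Proof. unfold asc_norm. rewrite !qpoch_S. simpl Cpow.
 pose proof (c1c2_poch_nz n). pose proof (Cpow_nz c1 n Hc1). pose proof (qq_nz q Hq n).
 pose proof (qq_factor_nz q Hq n). change (c1 ^ S n) with (c1 * c1 ^ n). cfield. repeat split; auto. Qed.
Lemma asc_weight_S j : asc_weight (S j) =
  asc_weight j * RC q / ((RC 1 - RC q * RC (q ^ j)) * (RC 1 - c1 * c2 * RC (q ^ j))).
Proof. unfold asc_weight. rewrite !qpoch_S, RC_qS.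
 pose proof (c1c2_poch_nz j). pose proof (qq_nz q Hq j). pose proof (qq_factor_nz q Hq j).
 pose proof (Hcc j). cfield. repeat split; auto. Qed.
Lemma qinv_poch_S n i : qinv_poch n (S i) = qinv_poch n i * (RC 1 - RC (/ q ^ n) * RC (q ^ i)).
Proof. unfold qinv_poch. apply qpoch_S. Qed.
Lemma qinv_poch_front n i : qinv_poch (S n) (S i) = (RC 1 - RC (/ q ^ S n)) * qinv_poch n i.
Proof. unfold qinv_poch. rewrite qpoch_front. do 2 f_equal. rewrite <- RtoC_mult. f_equal.
 simpl. field. split; [apply pow_nonzero|]; lra. Qed.
(** [(q^{-n};q)_j = 0] for [j > n]: the 3phi2 terminates. *)
Lemma qinv_poch_zero n j : (n < j)%nat -> qinv_poch n j = RC 0.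
Proof. intros H. unfold qinv_poch. replace j with (S n + (j - S n))%nat by lia.
 rewrite qpoch_add, qpoch_S, <- RtoC_mult, Rinv_l by (apply pow_nonzero; lra). cring. Qed.

Lemma asc_series_extend n N : (n < N)%nat ->
  asc_series n = Csum (fun j => asc_coeff n j * asc_pair j) N.
Proof. intros H. unfold asc_series. symmetry. apply Csum_extend; [lia|]. intros k Hk _.
 unfold asc_coeff. rewrite qinv_poch_zero by lia. cring. Qed.

Lemma asc_pair_mult j : (u + / u) * asc_pair j =
  ((RC 1 + c1 ^ 2 * RC (q ^ j) ^ 2) * asc_pair j - asc_pair (S j)) / (c1 * RC (q ^ j)).
Proof. unfold asc_pair. rewrite !qpoch_S. pose proof (RCqpow_nz j). cfield. auto. Qed.

(** The coefficient of [phi_{i+1}] in the recurrence vanishes. *)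
Lemma asc_coeff_identity_S m i :
  asc_coeff (S (S m)) (S i) * (RC 1 - RC (q ^ S (S m)))
  - asc_coeff (S m) (S i) * (RC 1 + c1 ^ 2 * RC (q ^ S i) ^ 2) / (c1 * RC (q ^ S i))
  + asc_coeff (S m) i / (c1 * RC (q ^ i))
  + (c1 + c2) * RC (q ^ S m) * asc_coeff (S m) (S i)
  + (RC 1 - c1 * c2 * RC (q ^ m)) * asc_coeff m (S i) = RC 0.
Proof.
 pose proof (qq_factor_nz q Hq m). pose proof (qq_factor_nz q Hq (S m)) as HqSm.
 rewrite RC_qS in HqSm.
 pose proof (asc_coeff_identity_alg (asc_norm m) (qinv_poch (S m) i) (asc_weight i) c1 c2
   (RC q) (RC (q ^ m)) (RC (q ^ i)) Hc1 RCq_nz (RCqpow_nz m) (RCqpow_nz i)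
   H HqSm (qq_factor_nz q Hq i) (Hcc i) (qinv_factor_nz m)) as E.
 cbv zeta in E. rewrite <- E. clear E.
 assert (Hdown : qinv_poch m (S i) = qinv_poch (S m) i * (RC 1 - RC (/ q ^ S m) * RC (q ^ i))
     * (RC 1 - RC (/ q ^ S m) * RC (q ^ S i)) / (RC 1 - RC (/ q ^ S m))).
 { assert (F2 : qinv_poch (S m) (S (S i)) = qinv_poch (S m) i
       * (RC 1 - RC (/ q ^ S m) * RC (q ^ i)) * (RC 1 - RC (/ q ^ S m) * RC (q ^ S i)))
     by (rewrite !qinv_poch_S; reflexivity).
   rewrite <- F2, qinv_poch_front. pose proof (qinv_factor_nz m) as Hnz.
   rewrite <- RC_qinvS in Hnz. cfield. auto. }
 unfold asc_coeff. rewrite !asc_norm_S, !asc_weight_S, (qinv_poch_front (S m) i),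
   (qinv_poch_S (S m) i), Hdown, !RC_qinvS, !RC_qS.
 pose proof (RCqpow_nz m). pose proof (RCqpow_nz i). pose proof RCq_nz.
 pose proof (qq_factor_nz q Hq i). pose proof (Hcc i). pose proof (qinv_factor_nz m).
 pose proof (Hcc (S m)) as HccS. rewrite RC_qS in HccS.
 cfield. repeat split; auto using Cminus_1_nz. Qed.

(** The coefficient of [phi_0] in the recurrence vanishes. *)
Lemma asc_coeff_identity_0 m :
  asc_coeff (S (S m)) 0 * (RC 1 - RC (q ^ S (S m)))
  - asc_coeff (S m) 0 * (RC 1 + c1 ^ 2 * RC (q ^ 0) ^ 2) / (c1 * RC (q ^ 0))
  + RC 0
  + (c1 + c2) * RC (q ^ S m) * asc_coeff (S m) 0
  + (RC 1 - c1 * c2 * RC (q ^ m)) * asc_coeff m 0 = RC 0.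
Proof.
 pose proof (qq_factor_nz q Hq m). pose proof (qq_factor_nz q Hq (S m)) as HqSm.
 rewrite RC_qS in HqSm.
 pose proof (asc_coeff_identity0_alg (asc_norm m) c1 c2 (RC q) (RC (q ^ m)) Hc1 H HqSm) as E.
 cbv zeta in E. rewrite <- E. clear E.
 unfold asc_coeff, qinv_poch, asc_weight. rewrite !asc_norm_S, !qpoch_O.
 change (q ^ 0)%R with 1%R. rewrite !RC_qS.
 pose proof (RCqpow_nz m). pose proof RCq_nz.
 pose proof (Hcc (S m)) as HccS. rewrite RC_qS in HccS.
 cfield. repeat split; auto using Cminus_1_nz. Qed.

Lemma Csum_shift_sh (b f : nat -> Complex.C) N : b N = RC 0 \/ f (S N) = RC 0 ->
  Csum (fun j => b j * f (S j)) (S N) = Csum (fun j => sh b j * f j) (S N).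
Proof. intros H. rewrite (Csum_first (fun j => sh b j * f j)). simpl sh.
 rewrite (Csum_S (fun j => b j * f (S j))).
 destruct H as [H|H]; rewrite H; cring. Qed.

Lemma asc_series_recurrence : asc_recurrence q u c1 c2 asc_series.
Proof. intros m.
 set (N := S (S (S m))).
 rewrite (asc_series_extend (S (S m)) N), (asc_series_extend (S m) N),
   (asc_series_extend m N) by (unfold N; lia).
 set (a := fun j => asc_coeff (S m) j * (RC 1 + c1 ^ 2 * RC (q ^ j) ^ 2) / (c1 * RC (q ^ j))).
 set (b := fun j => asc_coeff (S m) j / (c1 * RC (q ^ j))).
 assert (Hmul : (u + / u) * Csum (fun j => asc_coeff (S m) j * asc_pair j) N
              = Csum (fun j => a j * asc_pair j) N - Csum (fun j => sh b j * asc_pair j) N).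
 { rewrite <- Csum_scal.
   rewrite (Csum_ext _ (fun j => a j * asc_pair j + - (b j * asc_pair (S j)))).
   2:{ intros j _. unfold a, b.
       rewrite Cmult_assoc, (Cmult_comm (u + / u)), <- Cmult_assoc, asc_pair_mult.
       pose proof (RCqpow_nz j). cfield. split; auto. }
   rewrite Csum_plus, Csum_opp. unfold N. rewrite Csum_shift_sh; [reflexivity|].
   left. unfold b, asc_coeff. rewrite qinv_poch_zero by lia. unfold Complex.Cdiv. cring. }
 assert (Z : Csum (fun j => (RC 1 - RC (q ^ S (S m))) * (asc_coeff (S (S m)) j * asc_pair j)
           + (- (a j * asc_pair j) + (sh b j * asc_pair j
           + (((c1 + c2) * RC (q ^ S m)) * (asc_coeff (S m) j * asc_pair j)
           + (RC 1 - c1 * c2 * RC (q ^ m)) * (asc_coeff m j * asc_pair j))))) N = RC 0).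
 { apply Csum_zero. intros j _. destruct j as [|j]; simpl sh; unfold a, b.
   - transitivity ((asc_coeff (S (S m)) 0 * (RC 1 - RC (q ^ S (S m)))
       - asc_coeff (S m) 0 * (RC 1 + c1 ^ 2 * RC (q ^ 0) ^ 2) / (c1 * RC (q ^ 0)) + RC 0
       + (c1 + c2) * RC (q ^ S m) * asc_coeff (S m) 0
       + (RC 1 - c1 * c2 * RC (q ^ m)) * asc_coeff m 0) * asc_pair 0).
     + pose proof (RCqpow_nz 0). cfield. auto.
     + rewrite asc_coeff_identity_0. cring.
   - transitivity ((asc_coeff (S (S m)) (S j) * (RC 1 - RC (q ^ S (S m)))
       - asc_coeff (S m) (S j) * (RC 1 + c1 ^ 2 * RC (q ^ S j) ^ 2) / (c1 * RC (q ^ S j))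
       + asc_coeff (S m) j / (c1 * RC (q ^ j))
       + (c1 + c2) * RC (q ^ S m) * asc_coeff (S m) (S j)
       + (RC 1 - c1 * c2 * RC (q ^ m)) * asc_coeff m (S j)) * asc_pair (S j)).
     + pose proof (RCqpow_nz j). pose proof (RCqpow_nz (S j)). cfield. auto.
     + rewrite asc_coeff_identity_S. cring. }
 rewrite !Csum_plus, !Csum_scal, Csum_opp in Z.
 apply Ceq_minus. rewrite <- Z.
 replace ((u + / u - (c1 + c2) * RC (q ^ S m)) * Csum (fun j => asc_coeff (S m) j * asc_pair j) N)
   with ((u + / u) * Csum (fun j => asc_coeff (S m) j * asc_pair j) N
         - (c1 + c2) * RC (q ^ S m) * Csum (fun j => asc_coeff (S m) j * asc_pair j) N) by cring.
 rewrite Hmul. cring. Qed.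

Lemma asc_series_0 : asc_series 0 = RC 1.
Proof. unfold asc_series. rewrite Csum_S, Csum_O.
 unfold asc_coeff, asc_norm, qinv_poch, asc_weight, asc_pair. rewrite !qpoch_O.
 change (q ^ 0)%R with 1%R. cfield. Qed.

Lemma asc_series_1 : asc_series 1 = (u + / u - c1 - c2) / (RC 1 - RC q).
Proof. unfold asc_series. rewrite !Csum_S, Csum_O.
 unfold asc_coeff, asc_norm, qinv_poch, asc_weight, asc_pair.
 rewrite !qpoch_S, !qpoch_O. change (q ^ 0)%R with 1%R. change (c1 ^ 1) with (c1 * RC 1).
 replace (q ^ 1)%R with q by ring. rewrite RtoC_inv by lra.
 pose proof (Hcc 0) as H0. change (q ^ 0)%R with 1%R in H0. rewrite Cmult_1_r in H0.
 assert (Hq1 : RC 1 - RC q * RC 1 <> RC 0).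
 { pose proof (qq_factor_nz q Hq 0) as X. change (q ^ 0)%R with 1%R in X. exact X. }
 assert (Hq2 : RC 1 - RC q <> RC 0) by (rewrite <- RtoC_minus; apply RC_neq; lra).
 pose proof RCq_nz. cfield. repeat split; auto using Cminus_1_nz. Qed.

Lemma asc_series_product n : asc_series n = asc_product q u c1 c2 n.
Proof.
 apply (asc_recurrence_unique q u c1 c2 Hq).
 - apply asc_series_recurrence.
 - apply asc_product_recurrence; auto.
 - rewrite asc_series_0, asc_product_0; reflexivity.
 - rewrite asc_series_1, asc_product_1; auto.
Qed.
End SumForm.

Section GeneratingFunction.
Local Open Scope C_scope.
Variables (q : R) (u c1 c2 : Complex.C).
Hypothesis Hq : (0 < q < 1)%R.
Hypothesis Hmod : Cmod u = 1%R.
Hypothesis Hc1 : c1 <> RC 0.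
Hypothesis Hcc : forall j, RC 1 - c1 * c2 * RC (q ^ j) <> RC 0.

Definition asc_gf (t : R) := qpoch_inf (c1 * RC t) q * qpoch_inf (c2 * RC t) q /
   (qpoch_inf (RC t * u) q * qpoch_inf (RC t * / u) q).

Lemma unit_nz : u <> RC 0.
Proof. intros E. rewrite E, Cmod_0 in Hmod. lra. Qed.
Lemma Cmod_scale_u (t : R) : (0 <= t)%R -> Cmod (RC t * u) = t.
Proof. intros Ht. rewrite Cmod_mult, Hmod, Cmod_RC, Rabs_pos_eq; lra. Qed.
Lemma Cmod_scale_uinv (t : R) : (0 <= t)%R -> Cmod (RC t * / u) = t.
Proof. intros Ht. rewrite Cmod_mult, (Cmod_inv u unit_nz), Hmod, Cmod_RC, Rabs_pos_eq by auto. lra. Qed.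

(** Cauchy product of the two q-binomial series, whose coefficients are the
    product form [asc_product], equal to [r_n] by [asc_series_product]. *)
Theorem asc_generating_function (t : R) : (0 <= t < 1)%R ->
  Cconv (Csum (fun n => RC (t ^ n) * asc_series q u c1 c2 n)) (asc_gf t).
Proof. intros Ht. pose proof unit_nz as Hu.
 set (f := fun k => qbin_coeff q (c1 * / u) k * (RC t * u) ^ k).
 set (g := fun k => qbin_coeff q (c2 * u) k * (RC t * / u) ^ k).
 set (K := (qbin_bound q (c1 * / u) + qbin_bound q (c2 * u))%R).
 pose proof (qbin_bound_pos q (c1 * / u)). pose proof (qbin_bound_pos q (c2 * u)).
 assert (Bf : forall k, (Cmod (f k) <= K * t ^ k)%R).
 { intros k. unfold f. rewrite Cmod_mult, Cmod_pow, Cmod_scale_u by lra.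
   apply Rmult_le_compat_r; [apply pow_le; lra|].
   pose proof (qbin_coeff_bound q (c1 * / u) Hq k). unfold K. lra. }
 assert (Bg : forall k, (Cmod (g k) <= K * t ^ k)%R).
 { intros k. unfold g. rewrite Cmod_mult, Cmod_pow, Cmod_scale_uinv by lra.
   apply Rmult_le_compat_r; [apply pow_le; lra|].
   pose proof (qbin_coeff_bound q (c2 * u) Hq k). unfold K. lra. }
 pose proof (q_binomial q (c1 * / u) Hq (RC t * u) ltac:(rewrite Cmod_scale_u; lra)) as Sf.
 pose proof (q_binomial q (c2 * u) Hq (RC t * / u) ltac:(rewrite Cmod_scale_uinv; lra)) as Sg.
 pose proof (Cauchy_product f g _ _ K t Ht Bf Bg Sf Sg) as P.
 replace (c1 * / u * (RC t * u)) with (c1 * RC t) in P by (cfield; auto).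
 replace (c2 * u * (RC t * / u)) with (c2 * RC t) in P by (cfield; auto).
 assert (N1 : qpoch_inf (RC t * u) q <> RC 0)
   by (apply qpoch_inf_nz; auto; rewrite Cmod_scale_u; lra).
 assert (N2 : qpoch_inf (RC t * / u) q <> RC 0)
   by (apply qpoch_inf_nz; auto; rewrite Cmod_scale_uinv; lra).
 eapply Cconv_lim_eq; [|eapply Cconv_ext; [|exact P]].
 - unfold asc_gf. cfield. split; auto.
 - intros n. cbv beta. apply Csum_ext. intros k _.
   rewrite asc_series_product by auto. unfold asc_product, conv.
   rewrite <- Csum_scal. apply Csum_ext. intros j Hj. unfold f, g, asc_left, asc_right.
   rewrite !Cpow_mult_l, <- !RtoC_pow.
   replace (t ^ k)%R with (t ^ j * t ^ (k - j))%R by (rewrite <- pow_add; f_equal; lia).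
   rewrite RtoC_mult. cring.
Qed.

Lemma asc_gf_shift t j : (0 <= t < 1)%R ->
  qpoch (c1 * RC t) q j <> RC 0 -> qpoch (c2 * RC t) q j <> RC 0 ->
  asc_gf (t * q ^ j) = asc_gf t * (qpoch (RC t * u) q j * qpoch (RC t * / u) q j) /
     (qpoch (c1 * RC t) q j * qpoch (c2 * RC t) q j).
Proof. intros Ht N1 N2. pose proof unit_nz as Hu. unfold asc_gf.
 pose proof (pow_le1 q j). pose proof (pow_le q j).
 rewrite (qpoch_inf_split q Hq (c1 * RC t) j), (qpoch_inf_split q Hq (c2 * RC t) j),
   (qpoch_inf_split q Hq (RC t * u) j), (qpoch_inf_split q Hq (RC t * / u) j), !RtoC_mult.
 replace (c1 * (RC t * RC (q ^ j))) with (c1 * RC t * RC (q ^ j)) by cring.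
 replace (c2 * (RC t * RC (q ^ j))) with (c2 * RC t * RC (q ^ j)) by cring.
 replace (RC t * RC (q ^ j) * u) with (RC t * u * RC (q ^ j)) by cring.
 replace (RC t * RC (q ^ j) * / u) with (RC t * / u * RC (q ^ j)) by cring.
 assert (Z1 : qpoch_inf (RC t * u * RC (q ^ j)) q <> RC 0).
 { apply qpoch_inf_nz; auto. rewrite Cmod_mult, Cmod_scale_u, Cmod_RC, Rabs_pos_eq; nra. }
 assert (Z2 : qpoch_inf (RC t * / u * RC (q ^ j)) q <> RC 0).
 { apply qpoch_inf_nz; auto. rewrite Cmod_mult, Cmod_scale_uinv, Cmod_RC, Rabs_pos_eq; nra. }
 assert (Z3 : qpoch (RC t * u) q j <> RC 0)
   by (apply qpoch_nz_small; auto; rewrite Cmod_scale_u; lra).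
 assert (Z4 : qpoch (RC t * / u) q j <> RC 0)
   by (apply qpoch_nz_small; auto; rewrite Cmod_scale_uinv; lra).
 cfield. repeat split; auto. Qed.

Lemma asc_gf_combination (B : nat -> Complex.C) M (t : R) : (0 <= t < 1)%R ->
  Cconv (Csum (fun k => RC (t ^ k) * Csum (fun j => B j * RC ((q ^ j) ^ k)) M
                        * asc_series q u c1 c2 k))
        (Csum (fun j => B j * asc_gf (t * q ^ j)) M).
Proof. intros Ht.
 eapply Cconv_ext; [|apply (Cseries_finite_sum
   (fun j k => B j * (RC ((t * q ^ j) ^ k) * asc_series q u c1 c2 k)))].
 - intros N. apply Csum_ext. intros k _.
   transitivity ((RC (t ^ k) * asc_series q u c1 c2 k)
                 * Csum (fun j => B j * RC ((q ^ j) ^ k)) M); [|cring].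
   rewrite <- Csum_scal. apply Csum_ext. intros j _. rewrite Rpow_mult_distr, RtoC_mult. cring.
 - intros j _. eapply Cconv_ext; [|apply Cconv_scal, asc_generating_function].
   + intros N. cbv beta. rewrite <- Csum_scal. reflexivity.
   + pose proof (pow_le1 q j). pose proof (pow_le q j). split; nra.
Qed.
End GeneratingFunction.

(** ** The three families in explicit form
    All three basic hypergeometric series are balanced ([1 + s - r = 0]), so
    the sign/power factor of the general term is [1]. *)
Section ExplicitForms.
Local Open Scope C_scope.

Lemma Cexpi_neg th : Cexpi (- th) = / Cexpi th.
Proof. unfold Cexpi. rewrite cos_neg, sin_neg. unfold Complex.Cinv. simpl fst; simpl snd.
 assert (E : (cos th ^ 2 + sin th ^ 2 = 1)%R)
   by (pose proof (sin2_cos2 th) as H; unfold Rsqr in H; nra).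
 rewrite E. apply injective_projections; simpl; field. Qed.
Lemma Cexpi_mod th : Cmod (Cexpi th) = 1%R.
Proof. unfold Cmod, Cexpi. simpl fst; simpl snd. rewrite <- sqrt_1. f_equal.
 pose proof (sin2_cos2 th) as H. unfold Rsqr in H. simpl. lra. Qed.

Definition little_qJacobi_coeff (n : nat) (a b q : R) j :=
  qpoch (RC (/ q ^ n)) q j * qpoch (RC (a * b * q ^ S n)) q j /
  (qpoch (RC q) q j * qpoch (RC (a * q)) q j) * RC (q ^ j).

Lemma little_qJacobi_expansion n k a b q : little_qJacobi n (q ^ k) a b q =
  Csum (fun j => little_qJacobi_coeff n a b q j * RC ((q ^ j) ^ k)) (S n).
Proof. unfold little_qJacobi, phi_trunc. apply Csum_ext. intros j _.
 unfold phi_term, little_qJacobi_coeff, qpochs. cbv zeta. cbn [fold_right length].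
 change (powerRZ _ (1 + Z.of_nat 1 - Z.of_nat 2)) with 1%R. toC.
 replace (RC (q * q ^ k) ^ j) with (RC (q ^ j) * RC ((q ^ j) ^ k)).
 { rewrite !Cmult_1_r, Cmult_1_l, Cmult_assoc. reflexivity. }
 rewrite <- RtoC_mult, <- RtoC_pow. f_equal.
 rewrite Rpow_mult_distr, <- !pow_mult, Nat.mul_comm. reflexivity. Qed.

Lemma al_salam_chihara_series k th c1 c2 q : (0 < q < 1)%R -> c1 <> RC 0 ->
  (forall j, RC 1 - c1 * c2 * RC (q ^ j) <> RC 0) ->
  al_salam_chihara k th c1 c2 q = qpoch (RC q) q k * asc_series q (Cexpi th) c1 c2 k.
Proof. intros Hq Hc1 Hcc. unfold al_salam_chihara, phi_trunc, asc_series.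
 toC. rewrite <- !Csum_scal. apply Csum_ext. intros j _. unfold phi_term, qpochs.
 cbv zeta. cbn [fold_right length].
 change (powerRZ _ (1 + Z.of_nat 2 - Z.of_nat 3)) with 1%R. toC.
 rewrite qpoch_zero_arg, Cexpi_neg.
 unfold asc_coeff, asc_norm, qinv_poch, asc_weight, asc_pair. rewrite <- RtoC_pow.
 pose proof (c1c2_poch_nz q c1 c2 Hcc k). pose proof (c1c2_poch_nz q c1 c2 Hcc j).
 pose proof (Cpow_nz c1 k Hc1). pose proof (qq_nz q Hq k). pose proof (qq_nz q Hq j).
 cfield. repeat split; auto. Qed.

Lemma askey_wilson_series n th a1 a2 a3 a4 q : askey_wilson n th a1 a2 a3 a4 q =
  (qpoch (a1 * a2) q n * (qpoch (a1 * a3) q n * qpoch (a1 * a4) q n)) / a1 ^ n *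
  Csum (fun j => (qpoch (RC (/ q ^ n)) q j
        * (qpoch (a1 * a2 * a3 * a4 * RC (powerRZ q (Z.of_nat n - 1))) q j
        * (qpoch (a1 * Cexpi th) q j * qpoch (a1 * / Cexpi th) q j)))
      / (qpoch (RC q) q j * (qpoch (a1 * a2) q j * (qpoch (a1 * a3) q j * qpoch (a1 * a4) q j)))
      * RC q ^ j) (S n).
Proof. unfold askey_wilson, phi_trunc, qpochs. cbn [fold_right]. toC. rewrite !Cmult_1_r.
 f_equal. apply Csum_ext. intros j _. unfold phi_term, qpochs. cbv zeta. cbn [fold_right length].
 change (powerRZ _ (1 + Z.of_nat 3 - Z.of_nat 4)) with 1%R. toC.
 rewrite !Cmult_1_r, Cmult_1_l, Cexpi_neg. reflexivity. Qed.
End ExplicitForms.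

Section NormalizedSum.
Local Open Scope C_scope.
Variables (q a b t th : R) (n : nat) (c1 c2 : Complex.C).
Hypothesis Hq : (0 < q < 1)%R.
Hypothesis Ht : (0 < t < 1)%R.
Hypothesis Hc1 : c1 <> RC 0.
Hypothesis Hcc : forall j, RC 1 - c1 * c2 * RC (q ^ j) <> RC 0.
Hypothesis Hc12 : c1 * c2 = RC (b * q).
Hypothesis Hc1t : forall j, qpoch (c1 * RC t) q j <> RC 0.
Hypothesis Hc2t : forall j, qpoch (c2 * RC t) q j <> RC 0.
Hypothesis Haq : forall j, qpoch (RC (a * q)) q j <> RC 0.

Let u := Cexpi th.

Lemma combination_resummed :
  Csum (fun j => little_qJacobi_coeff n a b q j * asc_gf q u c1 c2 (t * q ^ j)) (S n) =
  asc_gf q u c1 c2 t * Csum (fun j => little_qJacobi_coeff n a b q j *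
    (qpoch (RC t * u) q j * qpoch (RC t * / u) q j / (qpoch (c1 * RC t) q j * qpoch (c2 * RC t) q j)))
    (S n).
Proof. rewrite <- Csum_scal. apply Csum_ext. intros j _.
 rewrite asc_gf_shift by first [exact (Cexpi_mod th) | lra | auto].
 pose proof (Hc1t j). pose proof (Hc2t j). cfield. split; auto. Qed.

Lemma combination_is_askey_wilson :
  askey_wilson n th (RC t) c1 c2 (RC (a * q / t)) q =
  qpoch (c1 * RC t) q n * qpoch (c2 * RC t) q n * qpoch (RC (a * q)) q n / RC t ^ n *
  Csum (fun j => little_qJacobi_coeff n a b q j *
    (qpoch (RC t * u) q j * qpoch (RC t * / u) q j / (qpoch (c1 * RC t) q j * qpoch (c2 * RC t) q j)))
    (S n).
Proof.
 assert (Eprod : RC t * c1 * c2 * RC (a * q / t) * RC (powerRZ q (Z.of_nat n - 1))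
                 = RC (a * b * q ^ S n)).
 { transitivity (RC t * (c1 * c2) * RC (a * q / t) * RC (powerRZ q (Z.of_nat n - 1))); [cring|].
   rewrite Hc12, <- !RtoC_mult. f_equal.
   replace (q ^ S n)%R with (q * (powerRZ q (Z.of_nat n - 1) * q))%R
     by (rewrite powerRZ_pred by lra; simpl; ring).
   field. lra. }
 assert (Eaq : RC t * RC (a * q / t) = RC (a * q)).
 { rewrite <- RtoC_mult. f_equal. field. lra. }
 rewrite askey_wilson_series, Eprod, Eaq.
 replace (RC t * c1) with (c1 * RC t) by cring. replace (RC t * c2) with (c2 * RC t) by cring.
 fold u. f_equal; [rewrite Cmult_assoc; reflexivity|]. apply Csum_ext. intros j _.
 unfold little_qJacobi_coeff. rewrite <- RtoC_pow.
 pose proof (Hc1t j). pose proof (Hc2t j). pose proof (Haq j). pose proof (qq_nz q Hq j).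
 cfield. repeat split; auto. Qed.

Theorem bilinear_sum_normalized :
  Cconv (Csum (fun k => RC (t ^ k) * little_qJacobi n (q ^ k) a b q * asc_series q u c1 c2 k))
    (RC (t ^ n) * (qpoch_inf (c1 * RC t * RC (q ^ n)) q * qpoch_inf (c2 * RC t * RC (q ^ n)) q)
     / (qpoch (RC (a * q)) q n * (qpoch_inf (RC t * u) q * qpoch_inf (RC t * / u) q))
     * askey_wilson n th (RC t) c1 c2 (RC (a * q / t)) q).
Proof.
 pose proof (Cexpi_mod th) as Hmod. fold u in Hmod.
 apply (Cconv_lim_eq _
   (Csum (fun j => little_qJacobi_coeff n a b q j * asc_gf q u c1 c2 (t * q ^ j)) (S n))).
 2:{ eapply Cconv_ext; [|apply (asc_gf_combination q u c1 c2 Hq Hmod Hc1 Hcc); lra].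
     intros N. apply Csum_ext. intros k _. rewrite little_qJacobi_expansion. reflexivity. }
 rewrite combination_resummed, combination_is_askey_wilson.
 unfold asc_gf. rewrite (qpoch_inf_split q Hq (c1 * RC t) n), (qpoch_inf_split q Hq (c2 * RC t) n).
 assert (Hu : u <> RC 0) by (apply (unit_nz u Hmod)).
 assert (Y1 : qpoch_inf (RC t * u) q <> RC 0)
   by (apply qpoch_inf_nz; auto; rewrite (Cmod_scale_u u Hmod); lra).
 assert (Y2 : qpoch_inf (RC t * / u) q <> RC 0)
   by (apply qpoch_inf_nz; auto; rewrite (Cmod_scale_uinv u Hmod); lra).
 assert (Tn : RC t <> RC 0) by (apply RC_neq; lra).
 pose proof (Haq n). pose proof (Hc1t n). pose proof (Hc2t n). rewrite (RtoC_pow t n).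
 cfield. repeat split; auto. apply Cpow_nz; auto. Qed.
End NormalizedSum.

Lemma sqrt_ratio a q : 0 < a -> 0 < q -> sqrt (q / a) = q / sqrt (a * q).
Proof. intros Ha Hq. assert (Hs : 0 < sqrt (a * q)) by (apply sqrt_lt_R0; nra).
 apply sqrt_lem_1; [apply Rlt_le, Rdiv_lt_0_compat; lra|apply Rlt_le, Rdiv_lt_0_compat; lra|].
 replace (q / sqrt (a * q) * (q / sqrt (a * q))) with (q * q / (sqrt (a * q) * sqrt (a * q)))
   by (field; lra).
 rewrite sqrt_sqrt by nra. field. lra. Qed.

Lemma one_minus_small_nz r q j : 0 < q < 1 -> r < 1 -> (RC 1 - RC r * RC (q ^ j))%C <> RC 0.
Proof. intros Hq Hr. rewrite <- RtoC_mult, <- RtoC_minus. apply RC_neq.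
 pose proof (pow_le1 q j). pose proof (pow_le q j).
 destruct (Rle_lt_dec r 0); [|nra]. assert (r * q ^ j <= 0) by nra. lra. Qed.

Lemma mul_lt_inv x q : 0 < q -> x < / q -> x * q < 1.
Proof. intros Hq Hx. apply (Rmult_lt_compat_r q) in Hx; auto. rewrite Rinv_l in Hx; lra. Qed.

(** The parameters of the theorem in normalized form: with [s = sqrt(aq)],
    [t = alpha s], [c1 = c s] and [c2 = (b/c)(q/s)]. *)
Lemma scaled_alpha_bounds s alpha : 0 < s -> s < alpha -> alpha < / s -> 0 < alpha * s < 1.
Proof. intros Hs H1 H2. split; [nra|]. apply (Rmult_lt_compat_r s) in H2; auto.
 rewrite Rinv_l in H2; lra. Qed.

Lemma c1c2_product c s b q : c <> RC 0 -> s <> 0 ->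
  (c * RC s * (RC b / c * RC (q / s)))%C = RC (b * q).
Proof. intros Hc Hs. rewrite RtoC_mult, RtoC_div by auto.
 assert (RC s <> RC 0) by (apply RC_neq; auto). cfield. auto. Qed.

Lemma c1_scaled c s alpha a q i : s * s = a * q ->
  (c * RC s * RC (alpha * s) * RC (q ^ i))%C = (RC (alpha * a * q ^ S i) * c)%C.
Proof. intros Hss. replace (alpha * a * q ^ S i) with (s * (alpha * s) * q ^ i).
 - rewrite !RtoC_mult. cring.
 - simpl. transitivity (alpha * (s * s) * q ^ i); [ring|]. rewrite Hss; ring. Qed.

Lemma c2_scaled c s alpha b q i : c <> RC 0 -> s <> 0 ->
  (RC b / c * RC (q / s) * RC (alpha * s) * RC (q ^ i))%C = (RC (alpha * b * q ^ S i) / c)%C.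
Proof. intros Hc Hs. replace (alpha * b * q ^ S i) with (b * (q / s) * (alpha * s) * q ^ i).
 - rewrite !RtoC_mult. cfield. auto.
 - simpl. field. auto. Qed.

Lemma qpoch_nz_of_ne_one x q k : (forall i, (i < k)%nat -> (x * RC (q ^ i))%C <> RC 1) ->
  qpoch x q k <> RC 0.
Proof. intros H. apply qpoch_nz. intros i Hi. apply Cone_minus_nz, H, Hi. Qed.

Close Scope C_scope.
Open Scope R_scope.

Theorem mainTheorem7 (q a b alpha : R) (c : Cplx) (n : nat) (theta : R)
  (hq0 : 0 < q) (hq1 : q < 1)
  (ha0 : 0 < a) (ha1 : a < / q)
  (hb : b < / q)
  (hc : c <> Czero)
  (hnd1 : forall m : nat, (1 <= m)%nat ->
          Cmul (RtoC (alpha * a * q ^ m)) c <> Cone)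
  (hnd2 : forall m : nat, (1 <= m)%nat ->
          Cdiv (RtoC (alpha * b * q ^ m)) c <> Cone)
  (hal1 : sqrt (a * q) < alpha) (hal2 : alpha < / sqrt (a * q))
  (hth0 : 0 <= theta) (hth1 : theta <= PI) :
  let c1 := Cmul c (RtoC (sqrt (a * q))) in
  let c2 := Cmul (Cdiv (RtoC b) c) (RtoC (sqrt (q / a))) in
  Cseries_conv
    (fun k => Cmul (Cmul (RtoC (alpha ^ k)) (little_qJacobi n (q ^ k) a b q))
                   (Cmul (Cdiv (RtoC (sqrt (a * q) ^ k)) (qpoch (RtoC q) q k))
                         (al_salam_chihara k theta c1 c2 q)))
    (Cmul
       (Cdiv
          (Cmul (RtoC (alpha ^ n * sqrt (a * q) ^ n))
                (Cmul (qpoch_inf (Cmul (RtoC (alpha * a * q ^ (S n))) c) q)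
                      (qpoch_inf (Cdiv (RtoC (alpha * b * q ^ (S n))) c) q)))
          (Cmul (qpoch (RtoC (a * q)) q n)
                (Cmul (qpoch_inf (Cmul (RtoC (alpha * sqrt (a * q))) (Cexpi theta)) q)
                      (qpoch_inf (Cmul (RtoC (alpha * sqrt (a * q))) (Cexpi (- theta))) q))))
       (askey_wilson n theta (RtoC (alpha * sqrt (a * q))) c1 c2
                     (RtoC (sqrt (a * q) / alpha)) q)).
Proof.
 cbv zeta. unfold Cseries_conv. rewrite sqrt_ratio by lra. toC.
 assert (Hq : 0 < q < 1) by lra.
 set (s := sqrt (a * q)) in *.
 assert (Hs : 0 < s) by (apply sqrt_lt_R0; nra).
 assert (Hss : s * s = a * q) by (apply sqrt_sqrt; nra).
 pose proof (scaled_alpha_bounds s alpha Hs hal1 hal2) as Ht.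
 set (t := alpha * s) in *. set (c1 := (c * RC s)%C). set (c2 := (RC b / c * RC (q / s))%C).
 assert (Hc1 : c1 <> RC 0) by (apply Cmult_neq_0; [exact hc|apply RC_neq; lra]).
 assert (Hc12 : (c1 * c2)%C = RC (b * q)) by (apply c1c2_product; auto; lra).
 assert (Hcc : forall j, (RC 1 - c1 * c2 * RC (q ^ j))%C <> RC 0).
 { intros j. rewrite Hc12. apply one_minus_small_nz, mul_lt_inv; lra. }
 assert (Hc1t : forall j, qpoch (c1 * RC t)%C q j <> RC 0).
 { intros j. apply qpoch_nz_of_ne_one. intros i _. unfold c1, t.
   rewrite (c1_scaled c s alpha a q i Hss). apply hnd1. lia. }
 assert (Hc2t : forall j, qpoch (c2 * RC t)%C q j <> RC 0).
 { intros j. apply qpoch_nz_of_ne_one. intros i _. unfold c2, t.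
   rewrite (c2_scaled c s alpha b q i hc) by lra.
   pose proof (hnd2 (S i) ltac:(lia)) as X. toC. exact X. }
 assert (Haq : forall j, qpoch (RC (a * q)) q j <> RC 0).
 { intros j. apply qpoch_nz. intros i _. apply one_minus_small_nz, mul_lt_inv; lra. }
 replace (alpha ^ n * s ^ n) with (t ^ n) by (unfold t; rewrite Rpow_mult_distr; ring).
 replace (s / alpha) with (a * q / t) by (unfold t; rewrite <- Hss; field; lra).
 rewrite <- (c1_scaled c s alpha a q n Hss), <- (c2_scaled c s alpha b q n hc) by lra.
 rewrite Cexpi_neg.
 eapply Cconv_ext; [|apply (bilinear_sum_normalized q a b t theta n c1 c2); auto].
 (* Termwise: [alpha^k s^k Q_k / (q;q)_k = t^k r_k]. *)
 intros N. apply Csum_ext. intros k _. toC. rewrite al_salam_chihara_series by auto.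
 replace (t ^ k) with (alpha ^ k * s ^ k) by (unfold t; rewrite Rpow_mult_distr; ring).
 pose proof (qq_nz q Hq k). rewrite RtoC_mult. cfield. auto.
Qed.
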